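(* Let $0<\alpha\le2$, $j\ne0$, $V\in C^2(\mathbb{T})$, and $G(x)=\sum_{k=0}^{n}p_k\cos(2\pi kx)$ with $p_0>0$ and $p_k>0$ for $1\le k\le n$. Then problem (P) has a unique solution $(m,\overline{H})$, given by $$m(x)=\frac{c_j}{\left(a_0^*+\sum_{k=1}^{n}a_k^*\cos(2\pi kx)+b_k^*\sin(2\pi kx)-V(x)\right)^{1/\alpha}},\qquad \overline{H}=a_0^*-p_0,$$ where $(a_0^*,\dots,a_n^*,b_1^*,\dots,b_n^* )$ is the unique maximizer over $\mathcal{C}$ of $$\Phi_\alpha(a_0,\dots,a_n,b_1,\dots,b_n)-a_0-\sum_{k=1}^n\frac{1}{2p_k}(a_k^2+b_k^2).$$
   Context: $\mathbb{T}=\mathbb{R}/\mathbb{Z}$. Problem (P): given $0<\alpha\le2$, $j\ne0$, $V,G\in C^2(\mathbb{T})$, find $(m,\overline{H})\in C(\mathbb{T})\times\mathbb{R}$ with $m>0$ on $\mathbb{T}$, $\int_{\mathbb{T}}m=1$, and $\frac{j^2}{2m(x)^\alpha}+V(x)=\int_{\mathbb{T}}G(x-y)m(y)\,dy+\overline{H}$ for all $x\in\mathbb{T}$. Set $c_j=(j^2/2)^{1/\alpha}$; $\phi_\alpha(t)=\frac{c_j\alpha}{\alpha-1}t^{(\alpha-1)/\alpha}$ if $\alpha\ne1$, $\phi_\alpha(t)=c_j\ln t$ if $\alpha=1$, for $t>0$. $\mathcal{C}\subset\mathbb{R}^{2n+1}$ is the set of $(a_0,\dots,a_n,b_1,\dots,b_n)$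 with $a_0+\sum_{k=1}^n(a_k\cos(2\pi kx)+b_k\sin(2\pi kx))-V(x)>0$ for all $x\in\mathbb{T}$, and $\Phi_\alpha(a_0,\dots,b_n)=\int_{\mathbb{T}}\phi_\alpha\big(a_0+\sum_{k=1}^n(a_k\cos(2\pi ky)+b_k\sin(2\pi ky))-V(y)\big)\,dy$ on $\mathcal{C}$. *)

From Stdlib Require Import Reals Lra ClassicalEpsilon.
Open Scope R_scope.

(* Integral over T = R/Z of a 1-periodic function, taken over [0,1].
   Defined as the Riemann integral when f is Riemann integrable on [0,1]
   (RiemannInt is independent of the integrability proof); all integrands
   used below are continuous, hence integrable. *)
Definition int01 (f : R -> R) : R :=
  epsilon (inhabits 0)
    (fun l => exists pr : Riemann_integrable f 0 1, RiemannInt pr = l).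

Fixpoint sum1 (n : nat) (f : nat -> R) : R :=
  match n with
  | O => 0
  | S m => sum1 m f + f (S m)
  end.

Definition sum0 (n : nat) (f : nat -> R) : R := f O + sum1 n f.

(* 1-periodic functions = functions on T *)
Definition periodic1 (f : R -> R) : Prop := forall x, f (x + 1) = f x.

Definition C2_T (f : R -> R) : Prop :=
  periodic1 f /\
  exists f1 f2 : R -> R,
    (forall x, derivable_pt_lim f x (f1 x)) /\
    (forall x, derivable_pt_lim f1 x (f2 x)) /\
    continuity f2.

Definition trig (n : nat) (a0 : R) (a b : nat -> R) (x : R) : R :=
  a0 + sum1 n (fun k => a k * cos (2 * PI * INR k * x) + b k * sin (2 * PI * INR k * x)).

Definition c_j (alpha j : R) : R := Rpower (j ^ 2 / 2) (1 / alpha).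

Definition phi_alpha (alpha j t : R) : R :=
  if Req_dec_T alpha 1 then c_j alpha j * ln t
  else c_j alpha j * alpha / (alpha - 1) * Rpower t ((alpha - 1) / alpha).

(* membership in the set C (only a_1..a_n, b_1..b_n are relevant) *)
Definition inC (n : nat) (V : R -> R) (a0 : R) (a b : nat -> R) : Prop :=
  forall x, trig n a0 a b x - V x > 0.

Definition Phi_alpha (alpha j : R) (n : nat) (V : R -> R) (a0 : R) (a b : nat -> R) : R :=
  int01 (fun y => phi_alpha alpha j (trig n a0 a b y - V y)).

Definition Jfun (alpha j : R) (n : nat) (V : R -> R) (p : nat -> R)
    (a0 : R) (a b : nat -> R) : R :=
  Phi_alpha alpha j n V a0 a b - a0
  - sum1 n (fun k => / (2 * p k) * (a k ^ 2 + b k ^ 2)).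

Definition coef_eq (n : nat) (a0 : R) (a b : nat -> R) (a0' : R) (a' b' : nat -> R) : Prop :=
  a0 = a0' /\ (forall k, (1 <= k <= n)%nat -> a k = a' k /\ b k = b' k).

Definition solves_P (alpha j : R) (V G : R -> R) (m : R -> R) (H : R) : Prop :=
  continuity m /\ periodic1 m /\ (forall x, m x > 0) /\ int01 m = 1 /\
  forall x, j ^ 2 / (2 * Rpower (m x) alpha) + V x
            = int01 (fun y => G (x - y) * m y) + H.

(* Since phi_alpha is strictly concave (its derivative dphi t = c_j / t^(1/alpha) is
   decreasing), J is strictly concave on the convex set C, so its critical points are
   exactly its maximizers and there is at most one.  The critical point equations read
   int01 m = 1, int01 (m cos_k) = a_k / p_k, int01 (m sin_k) = b_k / p_k for
   m = dphi (gap), where gap = trig - V; since j^2 / (2 m^alpha) = gap and the Fourier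
   coefficients of G * m are p_k times those of m, they say exactly that
   (m, a0 - p_0) solves (P).
   A maximizer exists: J is coercive, so its superlevel sets are bounded; and if the
   minimum delta of gap is small, raising a0 to make it eps increases J, because gap
   grows at most quadratically away from its minimum (V is C^2), and for alpha <= 2 this
   makes int01 (dphi (gap)) at least of order ln (1 / eps) > 1.  So J attains its
   maximum on the compact set of bounded coefficients with min gap >= eps, and this
   maximum is global. *)

From Stdlib Require Import Reals Lra Lia ZArith ClassicalEpsilon FunctionalExtensionality.
From Coquelicot Require Import Coquelicot.
From mathcomp Require all_boot all_order all_algebra all_classical all_reals all_analysis.
From mathcomp Require Rstruct Rstruct_topology.
Open Scope R_scope.

(** * Maxima on compact sets *)

Module CompactMax.
Import all_boot all_order all_algebra all_classical all_reals all_analysis.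
Import Rstruct Rstruct_topology.
Import Order.TTheory GRing.Theory Num.Theory numFieldNormedType.Exports.
Local Open Scope classical_set_scope.
Local Open Scope ring_scope.

Lemma entry_le_mx_norm n (v : 'rV[R]_n) i : `|v ord0 i| <= `|v|.
Proof.
have /mapP[j Hj ->] : `|v ord0 i| \in [seq `|v x.1 x.2| | x : 'I_1 * 'I_n].
  by apply/mapP; exists (ord0, i) => //=; rewrite mem_enum.
by rewrite [leRHS]/Num.Def.normr /= mx_normrE; apply/bigmax_geP; right => /=; exists j.
Qed.

Lemma rV_closed_bounded_max (N : nat) (F : 'rV[R]_N.+1 -> R) (B : set 'rV[R]_N.+1) (M : R) :
  B !=set0 ->
  (forall w, B w -> forall i, `|w ord0 i| <= M) ->
  (forall w : 'rV[R]_N.+1, (forall e, 0 < e -> exists v : 'rV[R]_N.+1,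
     B v /\ forall i, `|v ord0 i - w ord0 i| < e) -> B w) ->
  (forall w, B w -> forall e, 0 < e -> exists d, 0 < d /\ forall v : 'rV[R]_N.+1, B v ->
     (forall i, `|v ord0 i - w ord0 i| < d) -> `|F v - F w| < e) ->
  exists2 c, c \in B & forall t, t \in B -> F t <= F c.
Proof.
move=> B0 Bb Bcl Fc.
apply: compact_EVT_max => //.
- have Bcl' : closed B.
    move=> w /= cw; apply: Bcl => e e0.
    have nb : nbhs w (ball w e) by apply: nbhsx_ballx.
    have := cw (ball w e) nb.
    case=> v [Bv bv]; exists v; split => // i.
    move: bv; rewrite -ball_normE /ball_ /= => bv.
    apply: le_lt_trans bv; have := (@entry_le_mx_norm _ (w - v)%R i); rewrite !mxE distrC; exact.
  have cpt := (@rV_compact _ N.+1 (fun=> `[(- M), M]%classic) (fun=> @segment_compact _ _ _)).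
  apply: (subclosed_compact Bcl' cpt).
  move=> w Bw i /=. rewrite /= in_itv /= -ler_norml; exact: Bb.
- apply/subspace_continuousP => w Bw.
  change (F x @[x --> within B (nbhs w)] --> F w).
  have FF : Filter (within B (nbhs w)) by exact: within_filter.
  refine (proj2 (@cvgrPdist_lt R R^o _ _ FF F (F w)) _) => e e0.
  have [d [d0 Hd]] := Fc w Bw e e0.
  rewrite /within /=; apply/nbhs_ballP; exists d => // v bv Bv.
  rewrite distrC; apply: Hd => // i.
  move: bv; rewrite -ball_normE /ball_ /= => bv.
  apply: le_lt_trans bv; have := (@entry_le_mx_norm _ (w - v)%R i); rewrite !mxE distrC; exact.
Qed.

Local Close Scope ring_scope.
Local Open Scope R_scope.

Lemma closed_bounded_max (N : nat) (F : (nat -> R) -> R) (A : (nat -> R) -> Prop) (M : R) :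
  (exists v, A v) ->
  (forall v, A v -> forall i, (i <= N)%coq_nat -> Rabs (v i) <= M) ->
  (forall v, A v -> forall i, (N < i)%coq_nat -> v i = 0) ->
  (forall u, (forall i, (N < i)%coq_nat -> u i = 0) ->
     (forall e, 0 < e -> exists v, A v /\ forall i, (i <= N)%coq_nat -> Rabs (v i - u i) < e) -> A u) ->
  (forall u, A u -> forall e, 0 < e -> exists d, 0 < d /\ forall v, A v ->
     (forall i, (i <= N)%coq_nat -> Rabs (v i - u i) < d) -> Rabs (F v - F u) < e) ->
  exists c, A c /\ forall v, A v -> F v <= F c.
Proof.
Local Open Scope ring_scope.
move=> [v0 Av0] Ab A0 Acl Fc.
pose toV (w : 'rV[R]_N.+1) : nat -> R := fun k => if (k <= N)%N then w ord0 (inord k) else 0.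
pose enc (v : nat -> R) : 'rV[R]_N.+1 := \row_(i < N.+1) v i.
have encK v : A v -> toV (enc v) = v.
  move=> Av; apply: funext => k; rewrite /toV /enc.
  case: ifP => kN; first by rewrite mxE inordK.
  by rewrite (A0 v Av) //; apply/ssrnat.ltP; rewrite ltnNge kN.
have toVi (w : 'rV[R]_N.+1) (i : 'I_N.+1) : toV w i = w ord0 i.
  by rewrite /toV -ltnS ltn_ord inord_val.
have Bne : (fun w => A (toV w)) !=set0 by exists (enc v0); rewrite /= encK.
have Bbd : forall w : 'rV[R]_N.+1, A (toV w) -> forall i, `|w ord0 i| <= M.
  move=> w Aw i; rewrite -RabsE -toVi; apply/RleP; apply: Ab => //.
  by apply/ssrnat.leP; rewrite -ltnS ltn_ord.
have Bcl : forall w : 'rV[R]_N.+1, (forall e, 0 < e -> exists v : 'rV[R]_N.+1,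
    A (toV v) /\ forall i, `|v ord0 i - w ord0 i| < e) -> A (toV w).
  move=> w H; apply: Acl.
  + by move=> i /ssrnat.ltP iN; rewrite /toV leqNgt iN.
  + move=> e /RltP e0; have [v [Av Hv]] := H e e0; exists (toV v); split => // i /ssrnat.leP iN.
    have -> : i = (Ordinal (iN : (i < N.+1)%N) : nat) by [].
    rewrite !toVi RabsE; apply/RltP; exact: Hv.
have Fcont : forall w : 'rV[R]_N.+1, A (toV w) -> forall e, 0 < e ->
    exists d, 0 < d /\ forall v : 'rV[R]_N.+1, A (toV v) ->
     (forall i, `|v ord0 i - w ord0 i| < d) -> `|F (toV v) - F (toV w)| < e.
  move=> w Aw e e0; have [d [/RltP d0 Hd]] := Fc _ Aw e (RltP e0).
  exists d; split => // v Av Hv; rewrite -RabsE; apply/RltP; apply: Hd => // i /ssrnat.leP iN.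
  have -> : i = (Ordinal (iN : (i < N.+1)%N) : nat) by [].
  rewrite !toVi RabsE; apply/RltP; exact: Hv.
have [c cB cmax] :=
  @rV_closed_bounded_max N (fun w => F (toV w)) (fun w => A (toV w)) M Bne Bbd Bcl Fcont.
exists (toV c); split; first by move: cB; rewrite inE.
move=> v Av; rewrite -(encK v Av); apply/RleP; apply: cmax; rewrite inE /= encK //.
Qed.
End CompactMax.

Set Bullet Behavior "Strict Subproofs".

(** * Integration over [0, 1] *)

Definition cont (f : R -> R) := forall x, continuous f x.

Lemma cont_continuity_pt (f : R -> R) x : continuous f x -> continuity_pt f x.
Proof. intros H. apply continuity_pt_filterlim. exact H. Qed.

Lemma cont_of_continuity f : continuity f -> cont f.
Proof. intros H x. apply continuity_pt_filterlim. apply H. Qed.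

Lemma cont_plus f g : cont f -> cont g -> cont (fun x => f x + g x).
Proof. intros Hf Hg x. apply (continuous_plus f g); auto. Qed.

Lemma cont_minus f g : cont f -> cont g -> cont (fun x => f x - g x).
Proof. intros Hf Hg x. apply (continuous_minus f g); auto. Qed.

Lemma cont_mult f g : cont f -> cont g -> cont (fun x => f x * g x).
Proof. intros Hf Hg x. apply (continuous_mult f g); auto. Qed.

Lemma cont_const c : cont (fun _ => c).
Proof. intros x. apply continuous_const. Qed.

Lemma cont_scal c f : cont f -> cont (fun x => c * f x).
Proof. intros Hf. apply cont_mult; auto using cont_const. Qed.

Lemma cont_opp f : cont f -> cont (fun x => - f x).
Proof. intros Hf x. apply (continuous_opp f); auto. Qed.

Lemma cont_abs f : cont f -> cont (fun x => Rabs (f x)).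
Proof. intros Hf x. apply (continuous_comp f Rabs). apply Hf. apply continuous_Rabs. Qed.

Lemma cont_cos k : cont (fun y => cos (2 * PI * INR k * y)).
Proof. intros x. apply (@ex_derive_continuous R_AbsRing R_NormedModule). auto_derive. auto. Qed.

Lemma cont_sin k : cont (fun y => sin (2 * PI * INR k * y)).
Proof. intros x. apply (@ex_derive_continuous R_AbsRing R_NormedModule). auto_derive. auto. Qed.

Lemma ex_RInt_cont g a b : cont g -> ex_RInt g a b.
Proof. intros Hg. apply (@ex_RInt_continuous R_CompleteNormedModule). intros; apply Hg. Qed.

Lemma int01_RInt f : cont f -> int01 f = RInt f 0 1.
Proof.
  intros Hf. unfold int01.
  assert (pr : Riemann_integrable f 0 1).
  { apply continuity_implies_RiemannInt; [lra|]. intros; apply cont_continuity_pt, Hf. }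
  assert (H : exists l, exists pr : Riemann_integrable f 0 1, RiemannInt pr = l).
  { exists (RiemannInt pr). exists pr. reflexivity. }
  destruct (epsilon_spec (inhabits 0) _ H) as [pr' E].
  rewrite <- E. symmetry. apply RInt_Reals.
Qed.

Lemma int01_ext f g : (forall x, f x = g x) -> int01 f = int01 g.
Proof. intros H. replace f with g; auto. apply functional_extensionality; auto. Qed.

Lemma int01_plus f g : cont f -> cont g -> int01 (fun x => f x + g x) = int01 f + int01 g.
Proof.
  intros Hf Hg. rewrite !int01_RInt; auto using cont_plus.
  apply (@RInt_plus R_CompleteNormedModule f g 0 1); apply ex_RInt_cont; auto.
Qed.

Lemma int01_scal c f : cont f -> int01 (fun x => c * f x) = c * int01 f.
Proof.
  intros Hf. rewrite !int01_RInt; auto using cont_scal.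
  apply (@RInt_scal R_CompleteNormedModule f 0 1 c); apply ex_RInt_cont; auto.
Qed.

Lemma int01_opp f : cont f -> int01 (fun x => - f x) = - int01 f.
Proof.
  intros Hf. rewrite (int01_ext _ (fun x => -1 * f x)) by (intros; ring).
  rewrite int01_scal; auto; ring.
Qed.

Lemma int01_minus f g : cont f -> cont g -> int01 (fun x => f x - g x) = int01 f - int01 g.
Proof.
  intros Hf Hg. unfold Rminus. rewrite int01_plus, int01_opp; auto using cont_opp.
Qed.

Lemma int01_const c : int01 (fun _ => c) = c.
Proof.
  rewrite int01_RInt by apply cont_const. rewrite RInt_const.
  unfold scal; simpl; unfold mult; simpl. ring.
Qed.

Lemma int01_le f g : cont f -> cont g -> (forall x, 0 <= x <= 1 -> f x <= g x) ->
  int01 f <= int01 g.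
Proof.
  intros Hf Hg H. rewrite !int01_RInt; auto.
  apply RInt_le; auto using ex_RInt_cont; [lra|]. intros; apply H; lra.
Qed.

Lemma int01_abs f : cont f -> Rabs (int01 f) <= int01 (fun x => Rabs (f x)).
Proof.
  intros Hf. rewrite !int01_RInt; auto using cont_abs.
  apply abs_RInt_le; auto using ex_RInt_cont; lra.
Qed.

Lemma int01_gt0 f : cont f -> (forall x, 0 <= x <= 1 -> 0 < f x) -> 0 < int01 f.
Proof.
  intros Hf H.
  destruct (continuity_ab_min f 0 1) as [m [Hm Hm01]];
    [lra | intros; apply cont_continuity_pt, Hf |].
  apply Rlt_le_trans with (int01 (fun _ => f m)).
  - rewrite int01_const. apply H; lra.
  - apply int01_le; auto using cont_const.
Qed.

Lemma int01_derive_periodic (F f : R -> R) : (forall x, is_derive F x (f x)) -> cont f ->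
  F 1 = F 0 -> int01 f = 0.
Proof.
  intros HF Hf HP. rewrite int01_RInt by auto.
  assert (H := @is_RInt_derive R_CompleteNormedModule F f 0 1 (fun x _ => HF x) (fun x _ => Hf x)).
  rewrite (is_RInt_unique _ _ _ _ H). unfold minus, plus, opp; simpl. rewrite HP; ring.
Qed.

Lemma int01_cos k : (1 <= k)%nat -> int01 (fun y => cos (2 * PI * INR k * y)) = 0.
Proof.
  intros Hk. assert (0 < INR k) by (apply lt_0_INR; lia). assert (HP := PI_RGT_0).
  apply (int01_derive_periodic (fun y => sin (2 * PI * INR k * y) / (2 * PI * INR k))).
  - intros x. auto_derive; auto. field. lra.
  - apply cont_cos.
  - replace (2 * PI * INR k * 1) with (0 + 2 * INR k * PI) by ring.
    rewrite sin_period, Rmult_0_r. reflexivity.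
Qed.

Lemma int01_sin k : (1 <= k)%nat -> int01 (fun y => sin (2 * PI * INR k * y)) = 0.
Proof.
  intros Hk. assert (0 < INR k) by (apply lt_0_INR; lia). assert (HP := PI_RGT_0).
  apply (int01_derive_periodic (fun y => - cos (2 * PI * INR k * y) / (2 * PI * INR k))).
  - intros x. auto_derive; auto. field. lra.
  - apply cont_sin.
  - replace (2 * PI * INR k * 1) with (0 + 2 * INR k * PI) by ring.
    rewrite cos_period, Rmult_0_r. reflexivity.
Qed.

Lemma RInt_le_int01 g a b : cont g -> 0 <= a <= b -> b <= 1 ->
  (forall y, 0 <= y <= 1 -> 0 <= g y) -> RInt g a b <= int01 g.
Proof.
  intros Hg Ha Hb Hpos. rewrite int01_RInt by auto.
  rewrite <- (@RInt_Chasles R_CompleteNormedModule g 0 a 1) by (apply ex_RInt_cont; auto).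
  rewrite <- (@RInt_Chasles R_CompleteNormedModule g a b 1) by (apply ex_RInt_cont; auto).
  assert (0 <= RInt g 0 a)
    by (apply RInt_ge_0; [lra | apply ex_RInt_cont; auto | intros; apply Hpos; lra]).
  assert (0 <= RInt g b 1)
    by (apply RInt_ge_0; [lra | apply ex_RInt_cont; auto | intros; apply Hpos; lra]).
  unfold plus; simpl. lra.
Qed.

Lemma int01_ge_is_RInt g f a b v : cont g -> 0 <= a <= b -> b <= 1 ->
  (forall y, 0 <= y <= 1 -> 0 <= g y) -> (forall y, a <= y <= b -> f y <= g y) ->
  is_RInt f a b v -> v <= int01 g.
Proof.
  intros Hg Hab Hb Hpos Hfg Hf.
  apply Rle_trans with (RInt g a b); [| apply RInt_le_int01; auto].
  rewrite <- (is_RInt_unique _ _ _ _ Hf).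
  apply RInt_le; [lra | eexists; eauto | apply ex_RInt_cont; auto | intros; apply Hfg; lra].
Qed.

(* [h <= 1/2] guarantees that one side of [y0] of length [h] lies in [0, 1]. *)
Lemma int01_ge_log g y0 h c e S : 0 < S -> 0 < e -> 0 < h -> 0 <= c -> 0 <= y0 <= 1 ->
  h <= 1/2 -> cont g -> (forall y, 0 <= y <= 1 -> 0 <= g y) ->
  (forall y, 0 <= y <= 1 -> Rabs (y - y0) <= h -> c / (e + S * Rabs (y - y0)) <= g y) ->
  c / S * ln (1 + S * h / e) <= int01 g.
Proof.
  intros HS He Hh Hc Hy0 Hh2 Hg Hpos Hlow.
  assert (Hval : c / S * ln (1 + S * h / e) = c / S * ln (e + S * h) - c / S * ln e).
  { replace (1 + S * h / e) with ((e + S * h) / e) by (field; lra).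
    rewrite ln_div by nra. ring. }
  rewrite Hval.
  destruct (Rle_or_lt y0 (1/2)) as [Hl|Hl].
  - set (F := fun y => c / S * ln (e + S * (y - y0))).
    set (f := fun y => c / (e + S * (y - y0))).
    assert (HI : is_RInt f y0 (y0 + h) (minus (F (y0 + h)) (F y0))).
    { apply (@is_RInt_derive R_CompleteNormedModule); intros x Hx;
        rewrite Rmin_left, Rmax_right in Hx by lra; unfold F, f.
      - auto_derive; [nra | field; split; nra].
      - apply (@ex_derive_continuous R_AbsRing R_NormedModule). auto_derive. nra. }
    unfold F, minus, plus, opp in HI; simpl in HI.
    replace (y0 + h - y0) with h in HI by ring. rewrite Rminus_diag, Rmult_0_r, Rplus_0_r in HI.
    apply (int01_ge_is_RInt g f y0 (y0 + h)); auto; try lra.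
    intros y Hy. specialize (Hlow y ltac:(lra) ltac:(rewrite Rabs_pos_eq; lra)).
    rewrite Rabs_pos_eq in Hlow by lra. exact Hlow.
  - set (F := fun y => - (c / S * ln (e + S * (y0 - y)))).
    set (f := fun y => c / (e + S * (y0 - y))).
    assert (HI : is_RInt f (y0 - h) y0 (minus (F y0) (F (y0 - h)))).
    { apply (@is_RInt_derive R_CompleteNormedModule); intros x Hx;
        rewrite Rmin_left, Rmax_right in Hx by lra; unfold F, f.
      - auto_derive; [nra | field; split; nra].
      - apply (@ex_derive_continuous R_AbsRing R_NormedModule). auto_derive. nra. }
    unfold F, minus, plus, opp in HI; simpl in HI.
    replace (y0 - (y0 - h)) with h in HI by ring. rewrite Rminus_diag, Rmult_0_r, Rplus_0_r in HI.
    replace (- (c / S * ln e) + - - (c / S * ln (e + S * h))) with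
      (c / S * ln (e + S * h) - c / S * ln e) in HI by ring.
    apply (int01_ge_is_RInt g f (y0 - h) y0); auto; try lra.
    intros y Hy. specialize (Hlow y ltac:(lra) ltac:(rewrite Rabs_left1; lra)).
    rewrite Rabs_left1, Ropp_minus_distr in Hlow by lra. exact Hlow.
Qed.

(** * Finite sums and elementary real analysis *)

Lemma sum1_ext m f g : (forall k, (1 <= k <= m)%nat -> f k = g k) -> sum1 m f = sum1 m g.
Proof.
  induction m; intros H; simpl; auto.
  rewrite IHm by (intros; apply H; lia). rewrite H by lia. reflexivity.
Qed.

Lemma sum1_plus m f g : sum1 m (fun k => f k + g k) = sum1 m f + sum1 m g.
Proof. induction m; simpl; [ring|]. rewrite IHm; ring. Qed.

Lemma sum1_scal m c f : sum1 m (fun k => c * f k) = c * sum1 m f.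
Proof. induction m; simpl; [ring|]. rewrite IHm; ring. Qed.

Lemma sum1_minus m f g : sum1 m (fun k => f k - g k) = sum1 m f - sum1 m g.
Proof. induction m; simpl; [ring|]. rewrite IHm; ring. Qed.

Lemma sum1_const m c : sum1 m (fun _ => c) = INR m * c.
Proof. induction m; simpl sum1; [simpl; ring|]. rewrite IHm, S_INR; ring. Qed.

Lemma sum1_le m f g : (forall k, (1 <= k <= m)%nat -> f k <= g k) -> sum1 m f <= sum1 m g.
Proof.
  induction m; intros H; simpl; [lra|].
  apply Rplus_le_compat; [apply IHm; intros; apply H; lia | apply H; lia].
Qed.

Lemma sum1_ge0 m f : (forall k, (1 <= k <= m)%nat -> 0 <= f k) -> 0 <= sum1 m f.
Proof.
  intros H. rewrite <- (Rmult_0_r (INR m)), <- sum1_const. apply sum1_le; auto.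
Qed.

Lemma sum1_ge_term m f k : (forall k, (1 <= k <= m)%nat -> 0 <= f k) -> (1 <= k <= m)%nat ->
  f k <= sum1 m f.
Proof.
  induction m; intros H Hk; [lia|]. simpl.
  destruct (Nat.eq_dec k (S m)) as [->|Hne].
  - assert (0 <= sum1 m f) by (apply sum1_ge0; intros; apply H; lia). lra.
  - assert (f k <= sum1 m f) by (apply IHm; [intros; apply H; lia | lia]).
    assert (0 <= f (S m)) by (apply H; lia). lra.
Qed.

Lemma sum1_abs m f : Rabs (sum1 m f) <= sum1 m (fun k => Rabs (f k)).
Proof.
  induction m; simpl; [rewrite Rabs_R0; lra|].
  eapply Rle_trans; [apply Rabs_triang|]. lra.
Qed.

Lemma sum1_delta n f k : (1 <= k <= n)%nat ->
  sum1 n (fun i => if Nat.eq_dec i k then f i else 0) = f k.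
Proof.
  induction n; intros Hk; [lia|]. cbn [sum1].
  destruct (Nat.eq_dec (S n) k) as [E|E].
  - subst. destruct (Nat.eq_dec (S n) (S n)); [|lia].
    rewrite (sum1_ext _ _ (fun _ => 0)), sum1_const; [ring|].
    intros i Hi. destruct (Nat.eq_dec i (S n)); [lia|auto].
  - rewrite IHn by lia. ring.
Qed.

Lemma cont_sum1 m (F : nat -> R -> R) : (forall k, cont (F k)) ->
  cont (fun y => sum1 m (fun k => F k y)).
Proof. intros H. induction m; simpl; [apply cont_const | apply cont_plus; auto]. Qed.

Lemma int01_sum1 m (F : nat -> R -> R) : (forall k, cont (F k)) ->
  int01 (fun y => sum1 m (fun k => F k y)) = sum1 m (fun k => int01 (F k)).
Proof.
  intros H. induction m; simpl; [apply int01_const|].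
  rewrite int01_plus, IHm; auto using cont_sum1.
Qed.

Lemma is_derive_sum1 n (F F' : nat -> R -> R) y :
  (forall k, is_derive (F k) y (F' k y)) ->
  is_derive (fun y => sum1 n (fun k => F k y)) y (sum1 n (fun k => F' k y)).
Proof.
  intros H. induction n; simpl.
  - apply (@is_derive_const R_AbsRing R_NormedModule).
  - apply (@is_derive_plus R_AbsRing R_NormedModule); auto.
Qed.

Lemma sqrt_plus_le x y : 0 <= x -> 0 <= y -> sqrt (x + y) <= sqrt x + sqrt y.
Proof.
  intros Hx Hy. assert (H1 := sqrt_pos x). assert (H2 := sqrt_pos y).
  apply Rsqr_incr_0_var; [| lra]. unfold Rsqr. rewrite sqrt_sqrt by lra.
  replace ((sqrt x + sqrt y) * (sqrt x + sqrt y))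
    with (sqrt x * sqrt x + sqrt y * sqrt y + 2 * sqrt x * sqrt y) by ring.
  rewrite !sqrt_sqrt by lra. nra.
Qed.

Lemma Rpower_pos x y : 0 < Rpower x y.
Proof. apply exp_pos. Qed.

Lemma Rpower_div x y z : 0 < x -> 0 < y -> Rpower (x / y) z = Rpower x z / Rpower y z.
Proof.
  intros Hx Hy. unfold Rpower, Rdiv. rewrite ln_mult, ln_Rinv by (auto using Rinv_0_lt_compat).
  rewrite <- exp_Ropp, <- exp_plus. f_equal. ring.
Qed.

Lemma Rpower_inv_exp x a : 0 < x -> a <> 0 -> Rpower (Rpower x (1 / a)) a = x.
Proof.
  intros Hx Ha. rewrite Rpower_mult. replace (1 / a * a) with 1 by (field; auto).
  apply Rpower_1; auto.
Qed.

Lemma Rpower_exp_inv x a : 0 < x -> a <> 0 -> Rpower (Rpower x a) (1 / a) = x.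
Proof.
  intros Hx Ha. rewrite Rpower_mult. replace (a * (1 / a)) with 1 by (field; auto).
  apply Rpower_1; auto.
Qed.

Lemma periodic1_nat f : periodic1 f -> forall y k, f (y + INR k) = f y.
Proof.
  intros Hf y k. induction k; [simpl; rewrite Rplus_0_r; auto|].
  rewrite S_INR. replace (y + (INR k + 1)) with ((y + INR k) + 1) by ring. rewrite Hf; auto.
Qed.

Lemma periodic1_reduce f : periodic1 f -> forall y, exists z, 0 <= z <= 1 /\ f y = f z.
Proof.
  intros Hf y. destruct (archimed y) as [H1 H2].
  set (m := (up y - 1)%Z).
  exists (y - IZR m). split; [unfold m; rewrite minus_IZR; simpl; lra|].
  destruct (Z_le_gt_dec 0 m) as [Hm|Hm].
  - destruct (IZN m Hm) as [k Hk]. rewrite Hk, <- INR_IZR_INZ.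
    rewrite <- (periodic1_nat f Hf (y - INR k) k). f_equal; ring.
  - assert (Hm' : (0 <= - m)%Z) by lia. destruct (IZN (- m) Hm') as [k Hk].
    replace (IZR m) with (- INR k) by (rewrite INR_IZR_INZ, <- Hk, opp_IZR; ring).
    rewrite <- (periodic1_nat f Hf y k). f_equal; ring.
Qed.

Lemma periodic1_min f : periodic1 f -> cont f ->
  exists y0, 0 <= y0 <= 1 /\ forall y, f y0 <= f y.
Proof.
  intros Hp Hf. destruct (continuity_ab_min f 0 1) as [m [Hm Hm01]];
    [lra | intros; apply cont_continuity_pt, Hf |].
  exists m. split; auto. intros y. destruct (periodic1_reduce _ Hp y) as [z [Hz ->]]. auto.
Qed.

Lemma periodic1_max f : periodic1 f -> cont f ->
  exists y0, forall y, f y <= f y0.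
Proof.
  intros Hp Hf. destruct (continuity_ab_maj f 0 1) as [m [Hm _]];
    [lra | intros; apply cont_continuity_pt, Hf |].
  exists m. intros y. destruct (periodic1_reduce _ Hp y) as [z [Hz ->]]. auto.
Qed.

Lemma le0_of_le_linear z C s0 : 0 < s0 -> (forall s, 0 < s <= s0 -> z <= C * s) -> z <= 0.
Proof.
  intros Hs0 H. destruct (Rle_or_lt z 0) as [|Hz]; auto.
  assert (Hc : 0 < Rabs C + 1) by (generalize (Rabs_pos C); lra).
  set (s := Rmin s0 (z / (2 * (Rabs C + 1)))).
  assert (Hs : 0 < s) by (apply Rmin_pos; auto; apply Rdiv_lt_0_compat; lra).
  assert (Hs1 : s <= z / (2 * (Rabs C + 1))) by apply Rmin_r.
  specialize (H s (conj Hs (Rmin_l _ _))).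
  assert (C * s <= Rabs C * s) by (apply Rmult_le_compat_r; [lra | apply Rle_abs]).
  assert (s * (2 * (Rabs C + 1)) <= z).
  { apply (Rmult_le_compat_r (2 * (Rabs C + 1))) in Hs1; [|lra].
    unfold Rdiv in Hs1. rewrite Rmult_assoc, Rinv_l in Hs1 by lra. lra. }
  nra.
Qed.

Lemma Rabs_sub_le_derive_bound g g' a b M :
  (forall c, Rmin a b <= c <= Rmax a b -> derivable_pt_lim g c (g' c)) ->
  (forall c, Rmin a b <= c <= Rmax a b -> Rabs (g' c) <= M) ->
  Rabs (g b - g a) <= M * Rabs (b - a).
Proof.
  intros Hd Hb. destruct (Rtotal_order a b) as [H|[H|H]].
  - rewrite Rmin_left, Rmax_right in * by lra.
    destruct (MVT_cor2 g g' a b H) as [c [Ec Hc]]; [intros; apply Hd; lra|].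
    rewrite Ec, Rabs_mult.
    apply Rmult_le_compat_r; [apply Rabs_pos | apply Hb; lra].
  - subst. rewrite !Rminus_diag, Rabs_R0. lra.
  - rewrite Rmin_right, Rmax_left in * by lra.
    destruct (MVT_cor2 g g' b a H) as [c [Ec Hc]]; [intros; apply Hd; lra|].
    rewrite <- Rabs_Ropp, Ropp_minus_distr, Ec, Rabs_mult, (Rabs_minus_sym b a).
    apply Rmult_le_compat_r; [apply Rabs_pos | apply Hb; lra].
Qed.

Lemma le_quadratic_at_min f f1 f2 M y0 :
  (forall y, derivable_pt_lim f y (f1 y)) -> (forall y, derivable_pt_lim f1 y (f2 y)) ->
  (forall z, 0 <= z <= 1 -> Rabs (f2 z) <= M) ->
  0 <= y0 <= 1 -> (forall y, f y0 <= f y) ->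
  forall y, 0 <= y <= 1 -> f y <= f y0 + M * (y - y0) ^ 2.
Proof.
  intros Hf Hf1 Hf2 Hy0 Hmin y Hy.
  assert (Hcrit : f1 y0 = 0).
  { exact (deriv_minimum f (y0 - 1) (y0 + 1) y0 (exist _ (f1 y0) (Hf y0))
             ltac:(lra) ltac:(lra) ltac:(intros; apply Hmin)). }
  assert (Hslope : forall c, Rmin y0 y <= c <= Rmax y0 y -> Rabs (f1 c) <= M * Rabs (y - y0)).
  { intros c Hc.
    assert (Hcy : Rabs (c - y0) <= Rabs (y - y0)).
    { unfold Rmin, Rmax in Hc. destruct (Rle_dec y0 y).
      - rewrite !Rabs_pos_eq; lra.
      - rewrite !Rabs_left1; lra. }
    assert (H := Rabs_sub_le_derive_bound f1 f2 y0 c M (fun c _ => Hf1 c)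
                   ltac:(intros; apply Hf2; unfold Rmin, Rmax in *;
                         destruct (Rle_dec y0 c), (Rle_dec y0 y); lra)).
    rewrite Hcrit, Rminus_0_r in H.
    assert (0 <= M) by (eapply Rle_trans; [apply Rabs_pos | apply (Hf2 y0 Hy0)]).
    eapply Rle_trans; [exact H | apply Rmult_le_compat_l; auto]. }
  assert (H := Rabs_sub_le_derive_bound f f1 y0 y _ (fun c _ => Hf c) Hslope).
  rewrite <- (pow2_abs (y - y0)). apply Rabs_le_between in H. nra.
Qed.

(** * The concave function [phi_alpha] *)

Lemma c_j_pos alpha j : 0 < c_j alpha j.
Proof. apply Rpower_pos. Qed.

Section Phi.
Variables alpha j : R.
Hypothesis Ha : 0 < alpha.

Definition dphi (t : R) := c_j alpha j / Rpower t (1 / alpha).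
Definition ddphi (t : R) := c_j alpha j * (- (1 / alpha) * Rpower t (- (1 / alpha) - 1)).
Definition dphi_lip_const (e : R) := c_j alpha j * (1 / alpha) * Rpower e (- (1 / alpha) - 1).

Lemma dphi_pos t : 0 < dphi t.
Proof. apply Rdiv_lt_0_compat; [apply c_j_pos | apply Rpower_pos]. Qed.

Lemma dphi_Rpower t : dphi t = c_j alpha j * Rpower t (- (1 / alpha)).
Proof. unfold dphi. rewrite Rpower_Ropp. reflexivity. Qed.

Lemma phi_derive t : 0 < t -> derivable_pt_lim (phi_alpha alpha j) t (dphi t).
Proof.
  intros Ht. unfold phi_alpha. destruct (Req_dec_T alpha 1) as [E|E].
  - assert (H := derivable_pt_lim_scal ln (c_j alpha j) t (/ t) (derivable_pt_lim_ln t Ht)).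
    unfold dphi. replace (1 / alpha) with 1 by (rewrite E; field). rewrite Rpower_1 by auto.
    exact H.
  - assert (H := derivable_pt_lim_scal _ (c_j alpha j * alpha / (alpha - 1)) t _
                  (derivable_pt_lim_power t ((alpha - 1) / alpha) Ht)).
    replace (dphi t) with (c_j alpha j * alpha / (alpha - 1) *
                           ((alpha - 1) / alpha * Rpower t ((alpha - 1) / alpha - 1))); [exact H|].
    rewrite dphi_Rpower.
    replace ((alpha - 1) / alpha - 1) with (- (1 / alpha)) by (field; lra).
    field. split; [lra|]. intro; apply E; lra.
Qed.

Lemma dphi_decr u v : 0 < u -> u < v -> dphi v < dphi u.
Proof.
  intros Hu Huv. apply Rmult_lt_compat_l; [apply c_j_pos|].
  apply Rinv_lt_contravar; [apply Rmult_lt_0_compat; apply Rpower_pos|].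
  apply Rlt_Rpower_l; [apply Rdiv_lt_0_compat|]; lra.
Qed.

Lemma dphi_le u v : 0 < u -> u <= v -> dphi v <= dphi u.
Proof. intros Hu [H|H]; [left; apply dphi_decr; auto | subst; lra]. Qed.

Lemma phi_tangent_strict u t : 0 < u -> 0 < t -> u <> t ->
  phi_alpha alpha j u < phi_alpha alpha j t + dphi t * (u - t).
Proof.
  intros Hu Ht Hne. destruct (Rlt_or_le u t) as [Hl|Hl].
  - destruct (MVT_cor2 (phi_alpha alpha j) dphi u t Hl) as [c [Ec Hc]];
      [intros c Hc; apply phi_derive; lra|].
    assert (dphi t < dphi c) by (apply dphi_decr; lra). nra.
  - destruct (MVT_cor2 (phi_alpha alpha j) dphi t u) as [c [Ec Hc]];
      [lra | intros c Hc; apply phi_derive; lra|].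
    assert (dphi c < dphi t) by (apply dphi_decr; lra). nra.
Qed.

Lemma phi_tangent u t : 0 < u -> 0 < t ->
  phi_alpha alpha j u <= phi_alpha alpha j t + dphi t * (u - t).
Proof.
  intros Hu Ht. destruct (Req_dec u t) as [->|Hne]; [lra|].
  left; apply phi_tangent_strict; auto.
Qed.

Lemma phi_lip u v e : 0 < e -> e <= u -> e <= v ->
  Rabs (phi_alpha alpha j u - phi_alpha alpha j v) <= dphi e * Rabs (u - v).
Proof.
  intros He Hu Hv.
  assert (T1 := phi_tangent u v ltac:(lra) ltac:(lra)).
  assert (T2 := phi_tangent v u ltac:(lra) ltac:(lra)).
  assert (D1 := dphi_le e u He Hu). assert (D2 := dphi_le e v He Hv).
  assert (P1 := dphi_pos u). assert (P2 := dphi_pos v).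
  destruct (Rle_or_lt v u).
  - rewrite Rabs_pos_eq by nra. rewrite Rabs_pos_eq by lra. nra.
  - rewrite Rabs_left1 by nra. rewrite Rabs_left1 by lra. nra.
Qed.

Lemma phi_cont t : 0 < t -> continuous (phi_alpha alpha j) t.
Proof.
  intros Ht. apply continuity_pt_filterlim, derivable_continuous_pt.
  exists (dphi t). apply phi_derive; auto.
Qed.

Lemma dphi_derive t : 0 < t -> derivable_pt_lim dphi t (ddphi t).
Proof.
  intros Ht.
  assert (H := derivable_pt_lim_scal _ (c_j alpha j) t _
                 (derivable_pt_lim_power t (- (1 / alpha)) Ht)).
  replace dphi with (fun t => c_j alpha j * Rpower t (- (1 / alpha))); [exact H|].
  apply functional_extensionality; intros; symmetry; apply dphi_Rpower.
Qed.

Lemma dphi_cont t : 0 < t -> continuous dphi t.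
Proof.
  intros Ht. apply continuity_pt_filterlim, derivable_continuous_pt.
  exists (ddphi t). apply dphi_derive; auto.
Qed.

Lemma dphi_lip_const_ge0 e : 0 <= dphi_lip_const e.
Proof.
  assert (H := c_j_pos alpha j). assert (0 < 1 / alpha) by (apply Rdiv_lt_0_compat; lra).
  assert (H' := Rpower_pos e (- (1 / alpha) - 1)).
  unfold dphi_lip_const. apply Rmult_le_pos; [apply Rmult_le_pos|]; lra.
Qed.

Lemma ddphi_bound t e : 0 < e -> e <= t -> Rabs (ddphi t) <= dphi_lip_const e.
Proof.
  intros He Ht. unfold ddphi, dphi_lip_const.
  assert (Hc := c_j_pos alpha j).
  assert (Hq : 0 < 1 / alpha) by (apply Rdiv_lt_0_compat; lra).
  assert (P1 := Rpower_pos t (- (1 / alpha) - 1)).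
  assert (0 <= c_j alpha j * (1 / alpha)) by (apply Rmult_le_pos; lra).
  rewrite Rabs_left1 by nra.
  assert (Rpower t (- (1 / alpha) - 1) <= Rpower e (- (1 / alpha) - 1)).
  { replace (- (1 / alpha) - 1) with (- (1 / alpha + 1)) by ring.
    rewrite !Rpower_Ropp. apply Rinv_le_contravar; [apply Rpower_pos|].
    apply Rle_Rpower_l; lra. }
  nra.
Qed.

Lemma dphi_lip u v e : 0 < e -> e <= u -> e <= v ->
  Rabs (dphi u - dphi v) <= dphi_lip_const e * Rabs (u - v).
Proof.
  intros He Hu Hv.
  assert (Hseg : forall c, Rmin v u <= c <= Rmax v u -> e <= c)
    by (intros c Hc; unfold Rmin in Hc; destruct (Rle_dec v u); lra).
  apply (Rabs_sub_le_derive_bound dphi ddphi); intros c Hc.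
  - apply dphi_derive. specialize (Hseg c Hc). lra.
  - apply ddphi_bound; auto.
Qed.

Lemma phi_second_order t u e : 0 < e -> e <= t -> e <= t + u ->
  dphi t * u - dphi_lip_const e * u ^ 2 <= phi_alpha alpha j (t + u) - phi_alpha alpha j t.
Proof.
  intros He Ht Htu.
  assert (T := phi_tangent t (t + u) ltac:(lra) ltac:(lra)).
  assert (L := dphi_lip (t + u) t e He Htu Ht).
  replace (t + u - t) with u in L by ring.
  assert (Hprod : - (Rabs (dphi (t + u) - dphi t) * Rabs u) <= (dphi (t + u) - dphi t) * u).
  { rewrite <- Rabs_mult. generalize (Rle_abs (- ((dphi (t + u) - dphi t) * u))).
    rewrite Rabs_Ropp. lra. }
  assert (Hsq : Rabs (dphi (t + u) - dphi t) * Rabs u <= dphi_lip_const e * u ^ 2).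
  { rewrite <- (pow2_abs u). simpl. rewrite Rmult_1_r, <- Rmult_assoc.
    apply Rmult_le_compat_r; [apply Rabs_pos | exact L]. }
  replace (t - (t + u)) with (- u) in T by ring. nra.
Qed.

Lemma phi_perturb_lower t w s W e : 0 < e -> e <= t -> Rabs w <= W -> 0 < W ->
  Rabs s <= e / (2 * W) ->
  e / 2 <= t + s * w /\
  dphi t * (s * w) - dphi_lip_const (e / 2) * W ^ 2 * s ^ 2
  <= phi_alpha alpha j (t + s * w) - phi_alpha alpha j t.
Proof.
  intros He Ht Hw HW Hs.
  assert (Hsw : Rabs (s * w) <= e / 2).
  { rewrite Rabs_mult. apply Rle_trans with (e / (2 * W) * W).
    - apply Rmult_le_compat; auto using Rabs_pos.
    - right; field; lra. }
  apply Rabs_le_between in Hsw.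
  assert (Hts : e / 2 <= t + s * w) by lra. split; [exact Hts|].
  assert (P := phi_second_order t (s * w) (e / 2) ltac:(lra) ltac:(lra) Hts).
  assert (HL := dphi_lip_const_ge0 (e / 2)).
  assert (w ^ 2 <= W ^ 2)
    by (rewrite <- (pow2_abs w); apply pow_incr; split; [apply Rabs_pos | exact Hw]).
  assert (0 <= s ^ 2) by apply pow2_ge_0.
  assert (dphi_lip_const (e / 2) * (s ^ 2 * w ^ 2) <= dphi_lip_const (e / 2) * (s ^ 2 * W ^ 2))
    by (apply Rmult_le_compat_l; [exact HL | apply Rmult_le_compat_l; auto]).
  replace ((s * w) ^ 2) with (s ^ 2 * w ^ 2) in P by ring.
  lra.
Qed.

Lemma phi_le_affine : exists A, forall t, 0 < t -> phi_alpha alpha j t <= A + t / 2.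
Proof.
  set (t0 := Rpower (2 * c_j alpha j) alpha).
  assert (Hc := c_j_pos alpha j).
  assert (Hd : dphi t0 = / 2).
  { unfold dphi, t0. rewrite Rpower_exp_inv by lra. field. lra. }
  exists (phi_alpha alpha j t0). intros t Ht.
  assert (T := phi_tangent t t0 Ht (Rpower_pos _ _)). rewrite Hd in T.
  assert (0 < t0) by apply Rpower_pos. lra.
Qed.
End Phi.

Lemma dphi_ge_inv_sqrt alpha j w : 0 < alpha <= 2 -> 0 < w <= 1 ->
  c_j alpha j / sqrt w <= dphi alpha j w.
Proof.
  intros Ha Hw. apply Rmult_le_compat_l; [left; apply c_j_pos|].
  apply Rinv_le_contravar; [apply Rpower_pos|].
  rewrite <- Rpower_sqrt by lra. unfold Rpower.
  assert (ln w <= 0) by (rewrite <- ln_1; apply ln_le; lra).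
  assert (/ 2 <= 1 / alpha) by (unfold Rdiv; rewrite Rmult_1_l; apply Rinv_le_contravar; lra).
  destruct (Req_dec (1 / alpha * ln w) (/ 2 * ln w)) as [E|E]; [rewrite E; lra|].
  left. apply exp_increasing. nra.
Qed.

Definition boundary_width (M : R) := 1 / (2 * (M + 1)).

(* Chosen so that [c_j / sqrt M * ln (1 + sqrt M * boundary_width M / sqrt eps) > 1]. *)
Definition boundary_level (alpha j M : R) :=
  (Rmin (1/2) (sqrt M * boundary_width M / exp (sqrt M / c_j alpha j))) ^ 2.

Lemma boundary_level_bounds alpha j M : 1 <= M -> 0 < boundary_level alpha j M <= 1/4.
Proof.
  intros HM. assert (Hh : 0 < boundary_width M) by (apply Rdiv_lt_0_compat; lra).
  assert (HS : 0 < sqrt M) by (apply sqrt_lt_R0; lra).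
  assert (Hm : 0 < Rmin (1/2) (sqrt M * boundary_width M / exp (sqrt M / c_j alpha j))).
  { apply Rmin_pos; [lra|]. apply Rdiv_lt_0_compat; [nra | apply exp_pos]. }
  assert (Rmin (1/2) (sqrt M * boundary_width M / exp (sqrt M / c_j alpha j)) <= 1/2)
    by apply Rmin_l.
  unfold boundary_level. split; [apply pow_lt; auto | nra].
Qed.

Lemma boundary_width_sq_le M : 1 <= M -> M * boundary_width M ^ 2 <= 1/4.
Proof.
  intros HM. unfold boundary_width.
  replace (M * (1 / (2 * (M + 1))) ^ 2) with (M / (4 * (M + 1) ^ 2)) by (field; lra).
  apply (Rmult_le_reg_r (4 * (M + 1) ^ 2)); [nra|].
  unfold Rdiv. rewrite Rmult_assoc, Rinv_l by nra. nra.
Qed.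

Lemma boundary_level_log_gt1 alpha j M : 1 <= M ->
  1 < c_j alpha j / sqrt M
      * ln (1 + sqrt M * boundary_width M / sqrt (boundary_level alpha j M)).
Proof.
  intros HM. set (h := boundary_width M). set (cj := c_j alpha j).
  assert (Hh : 0 < h) by (apply Rdiv_lt_0_compat; lra).
  assert (HS : 0 < sqrt M) by (apply sqrt_lt_R0; lra).
  assert (Hcj : 0 < cj) by apply c_j_pos.
  set (m := Rmin (1/2) (sqrt M * h / exp (sqrt M / cj))).
  assert (Hm0 : 0 < m) by (apply Rmin_pos; [lra | apply Rdiv_lt_0_compat; [nra | apply exp_pos]]).
  assert (Hse : sqrt (boundary_level alpha j M) = m) by (apply sqrt_pow2; lra).
  rewrite Hse.
  assert (HE : exp (sqrt M / cj) <= sqrt M * h / m).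
  { assert (Hm : m <= sqrt M * h / exp (sqrt M / cj)) by apply Rmin_r.
    apply (Rmult_le_reg_r m); auto.
    unfold Rdiv. rewrite Rmult_assoc, Rinv_l by lra.
    apply (Rmult_le_reg_l (/ exp (sqrt M / cj))); [apply Rinv_0_lt_compat, exp_pos|].
    rewrite <- Rmult_assoc, Rinv_l by (apply Rgt_not_eq, exp_pos). lra. }
  assert (Hln : sqrt M / cj < ln (1 + sqrt M * h / m)).
  { rewrite <- (ln_exp (sqrt M / cj)) at 1. apply ln_increasing; [apply exp_pos | lra]. }
  apply (Rmult_lt_reg_l (sqrt M / cj)); [apply Rdiv_lt_0_compat; lra|].
  replace (sqrt M / cj * (cj / sqrt M * ln (1 + sqrt M * h / m)))
    with (ln (1 + sqrt M * h / m)) by (field; lra).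
  lra.
Qed.

(* For [alpha <= 2], [dphi (f y) >= c_j / (sqrt eps + sqrt M |y - y0|)], whose integral
   near [y0] is of order [ln (1 / eps)]. *)
Lemma int01_dphi_gt1 alpha j M f y0 : 0 < alpha <= 2 -> 1 <= M -> cont f ->
  (forall y, 0 < f y) -> 0 <= y0 <= 1 ->
  (forall y, 0 <= y <= 1 -> f y <= boundary_level alpha j M + M * (y - y0) ^ 2) ->
  1 < int01 (fun y => dphi alpha j (f y)).
Proof.
  intros Ha HM Hf Hpos Hy0 Hf_le.
  eapply Rlt_le_trans; [apply (boundary_level_log_gt1 alpha j M HM)|].
  set (eps := boundary_level alpha j M). set (h := boundary_width M).
  set (cj := c_j alpha j).
  destruct (boundary_level_bounds alpha j M HM) as [He1 He2]. fold eps in He1, He2.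
  assert (Hh : 0 < h) by (apply Rdiv_lt_0_compat; lra).
  assert (Hh2 : h <= 1/2).
  { unfold h, boundary_width. apply Rmult_le_reg_r with (2 * (M + 1)); [lra|].
    unfold Rdiv. rewrite Rmult_assoc, Rinv_l by lra. lra. }
  assert (HS : 0 < sqrt M) by (apply sqrt_lt_R0; lra).
  assert (Hcj : 0 < cj) by apply c_j_pos.
  assert (Hsq : 0 < sqrt eps) by (apply sqrt_lt_R0; lra).
  assert (Hg : cont (fun y => dphi alpha j (f y))).
  { intros x. apply (continuous_comp f (dphi alpha j)); [apply Hf | apply dphi_cont; auto]. }
  apply (int01_ge_log _ y0); auto; [lra | intros; left; apply dphi_pos |].
  intros y Hy Hyh. set (u := y - y0) in *. set (w := eps + M * u ^ 2).
  assert (HMh : M * u ^ 2 <= 1/4).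
  { assert (u ^ 2 <= h ^ 2) by (rewrite <- (pow2_abs u); apply pow_incr; split; auto using Rabs_pos).
    generalize (boundary_width_sq_le M HM). fold h. nra. }
  assert (Hu2 : 0 <= M * u ^ 2) by (apply Rmult_le_pos; [lra | apply pow2_ge_0]).
  assert (D1 := dphi_le alpha j ltac:(lra) _ _ (Hpos y) (Hf_le y Hy)). fold eps u w in D1.
  assert (D2 := dphi_ge_inv_sqrt alpha j w Ha ltac:(unfold w; lra)).
  assert (Hsw : sqrt w <= sqrt eps + sqrt M * Rabs u).
  { unfold w. eapply Rle_trans; [apply sqrt_plus_le; lra|].
    rewrite sqrt_mult by (auto using pow2_ge_0; lra). rewrite <- Rsqr_pow2, sqrt_Rsqr_abs. lra. }
  assert (Hw0 : 0 < sqrt w) by (apply sqrt_lt_R0; unfold w; lra).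
  assert (cj / (sqrt eps + sqrt M * Rabs u) <= cj / sqrt w)
    by (apply Rmult_le_compat_l; [lra | apply Rinv_le_contravar; auto]).
  fold cj in D2. lra.
Qed.

(** * Trigonometric polynomials *)

Definition cosk (k : nat) (y : R) := cos (2 * PI * INR k * y).
Definition sink (k : nat) (y : R) := sin (2 * PI * INR k * y).

Lemma trig_cont n a0 a b : cont (trig n a0 a b).
Proof.
  apply cont_plus; [apply cont_const|].
  apply (cont_sum1 n (fun k y => a k * cos (2 * PI * INR k * y) + b k * sin (2 * PI * INR k * y))).
  intros k. apply cont_plus; apply cont_scal; [apply cont_cos | apply cont_sin].
Qed.

Lemma trig_periodic n a0 a b : periodic1 (trig n a0 a b).
Proof.
  intros x. unfold trig. f_equal. apply sum1_ext. intros k _.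
  replace (2 * PI * INR k * (x + 1)) with (2 * PI * INR k * x + 2 * INR k * PI) by ring.
  rewrite cos_period, sin_period. reflexivity.
Qed.

Lemma trig_ext n a0 a b a0' a' b' : coef_eq n a0 a b a0' a' b' ->
  forall y, trig n a0 a b y = trig n a0' a' b' y.
Proof.
  intros [-> H] y. unfold trig. f_equal. apply sum1_ext. intros k Hk.
  destruct (H k Hk) as [-> ->]. reflexivity.
Qed.

Lemma coef_eq_sym n a0 a b a0' a' b' : coef_eq n a0 a b a0' a' b' -> coef_eq n a0' a' b' a0 a b.
Proof.
  intros [E H]. split; auto. intros k Hk. destruct (H k Hk); split; auto.
Qed.

Lemma trig_add n x0 x xb z0 z zb y :
  trig n x0 x xb y + trig n z0 z zb y
  = trig n (x0 + z0) (fun k => x k + z k) (fun k => xb k + zb k) y.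
Proof.
  unfold trig. rewrite <- Rplus_assoc, (Rplus_comm _ z0), <- !Rplus_assoc, Rplus_assoc.
  rewrite <- sum1_plus. f_equal; [ring|]. apply sum1_ext; intros; ring.
Qed.

Lemma trig_scal n s x0 x xb y :
  s * trig n x0 x xb y = trig n (s * x0) (fun k => s * x k) (fun k => s * xb k) y.
Proof.
  unfold trig. rewrite Rmult_plus_distr_l, <- sum1_scal. f_equal. apply sum1_ext; intros; ring.
Qed.

Lemma trig_sub n a0 a b a0' a' b' y :
  trig n a0' a' b' y - trig n a0 a b y
  = trig n (a0' - a0) (fun k => a' k - a k) (fun k => b' k - b k) y.
Proof.
  assert (E : forall x0 s0 x1 s1, x0 + s0 - (x1 + s1) = x0 - x1 + (s0 - s1)) by (intros; ring).
  unfold trig. rewrite E, <- sum1_minus. f_equal. apply sum1_ext; intros; ring.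
Qed.

Lemma trig_const n c y : trig n c (fun _ => 0) (fun _ => 0) y = c.
Proof.
  unfold trig. rewrite (sum1_ext _ _ (fun _ => 0)), sum1_const; [ring | intros; ring].
Qed.

Lemma trig_unit_cos n k y : (1 <= k <= n)%nat ->
  trig n 0 (fun i => if Nat.eq_dec i k then 1 else 0) (fun _ => 0) y = cosk k y.
Proof.
  intros Hk. unfold trig.
  rewrite (sum1_ext _ _ (fun i => if Nat.eq_dec i k then cosk i y else 0)).
  - rewrite sum1_delta; auto. ring.
  - intros i _. unfold cosk. destruct (Nat.eq_dec i k); ring.
Qed.

Lemma trig_unit_sin n k y : (1 <= k <= n)%nat ->
  trig n 0 (fun _ => 0) (fun i => if Nat.eq_dec i k then 1 else 0) y = sink k y.
Proof.
  intros Hk. unfold trig.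
  rewrite (sum1_ext _ _ (fun i => if Nat.eq_dec i k then sink i y else 0)).
  - rewrite sum1_delta; auto. ring.
  - intros i _. unfold sink. destruct (Nat.eq_dec i k); ring.
Qed.

Lemma cos_sin_weighted_bound c s x y : Rabs (c * cos x + s * sin y) <= Rabs c + Rabs s.
Proof.
  eapply Rle_trans; [apply Rabs_triang|]. rewrite !Rabs_mult.
  assert (Rabs (cos x) <= 1) by (apply Rabs_le; apply COS_bound).
  assert (Rabs (sin y) <= 1) by (apply Rabs_le; apply SIN_bound).
  assert (0 <= Rabs c) by apply Rabs_pos. assert (0 <= Rabs s) by apply Rabs_pos.
  nra.
Qed.

Lemma trig_abs n x0 x xb y :
  Rabs (trig n x0 x xb y) <= Rabs x0 + sum1 n (fun k => Rabs (x k) + Rabs (xb k)).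
Proof.
  eapply Rle_trans; [apply Rabs_triang|]. apply Rplus_le_compat_l.
  eapply Rle_trans; [apply sum1_abs|]. apply sum1_le. intros k _.
  apply cos_sin_weighted_bound.
Qed.

Lemma trig_sub_abs n a0 a b a0' a' b' y :
  Rabs (trig n a0' a' b' y - trig n a0 a b y)
  <= Rabs (a0' - a0) + sum1 n (fun k => Rabs (a' k - a k) + Rabs (b' k - b k)).
Proof. rewrite trig_sub. apply trig_abs. Qed.

Lemma int01_mul_trig n g h0 ha hb : cont g ->
  int01 (fun y => g y * trig n h0 ha hb y) =
  h0 * int01 g + sum1 n (fun k => ha k * int01 (fun y => g y * cosk k y)
                                  + hb k * int01 (fun y => g y * sink k y)).
Proof.
  intros Hg.
  assert (Hcos : forall k, cont (fun y => g y * cosk k y)) by (intros; apply cont_mult, cont_cos; auto).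
  assert (Hsin : forall k, cont (fun y => g y * sink k y)) by (intros; apply cont_mult, cont_sin; auto).
  rewrite (int01_ext _ (fun y => h0 * g y + sum1 n (fun k => ha k * (g y * cosk k y)
                                                         + hb k * (g y * sink k y)))).
  2:{ intros y. unfold trig. rewrite Rmult_plus_distr_l, <- sum1_scal. unfold cosk, sink.
      f_equal; [ring|]. apply sum1_ext; intros; ring. }
  assert (Hterm : forall k, cont (fun y => ha k * (g y * cosk k y) + hb k * (g y * sink k y)))
    by (intros; apply cont_plus; apply cont_scal; auto).
  rewrite int01_plus, int01_scal, (int01_sum1 n _ Hterm); auto using cont_scal.
  2:{ apply (cont_sum1 n _ Hterm). }
  f_equal. apply sum1_ext. intros k _.
  rewrite int01_plus, !int01_scal; auto using cont_scal.
Qed.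

Lemma int01_trig n a0 a b : int01 (trig n a0 a b) = a0.
Proof.
  rewrite (int01_ext _ (fun y => 1 * trig n a0 a b y)) by (intros; ring).
  rewrite int01_mul_trig, int01_const by apply cont_const.
  rewrite (sum1_ext _ _ (fun _ => 0)), sum1_const; [ring|].
  intros k Hk.
  rewrite (int01_ext (fun y => 1 * cosk k y) (fun y => cos (2 * PI * INR k * y)))
    by (intros; unfold cosk; ring).
  rewrite (int01_ext (fun y => 1 * sink k y) (fun y => sin (2 * PI * INR k * y)))
    by (intros; unfold sink; ring).
  rewrite int01_cos, int01_sin by lia. ring.
Qed.

Definition trig1 n (a b : nat -> R) y :=
  sum1 n (fun k => 2 * PI * INR k * (b k * cos (2 * PI * INR k * y) - a k * sin (2 * PI * INR k * y))).
Definition trig2 n (a b : nat -> R) y :=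
  sum1 n (fun k => - (2 * PI * INR k) ^ 2
                   * (a k * cos (2 * PI * INR k * y) + b k * sin (2 * PI * INR k * y))).

Lemma trig_derive n a0 a b y : derivable_pt_lim (trig n a0 a b) y (trig1 n a b y).
Proof.
  apply is_derive_Reals. replace (trig1 n a b y) with (0 + trig1 n a b y) by ring.
  unfold trig, trig1.
  apply (@is_derive_plus R_AbsRing R_NormedModule);
    [apply (@is_derive_const R_AbsRing R_NormedModule)|].
  apply (is_derive_sum1 n (fun k y => a k * cos (2 * PI * INR k * y) + b k * sin (2 * PI * INR k * y))
    (fun k y => 2 * PI * INR k * (b k * cos (2 * PI * INR k * y) - a k * sin (2 * PI * INR k * y)))).
  intros k. auto_derive; auto. ring.
Qed.

Lemma trig1_derive n a b y : derivable_pt_lim (trig1 n a b) y (trig2 n a b y).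
Proof.
  apply is_derive_Reals. unfold trig1, trig2.
  apply (is_derive_sum1 n
    (fun k y => 2 * PI * INR k * (b k * cos (2 * PI * INR k * y) - a k * sin (2 * PI * INR k * y)))
    (fun k y => - (2 * PI * INR k) ^ 2
                * (a k * cos (2 * PI * INR k * y) + b k * sin (2 * PI * INR k * y)))).
  intros k. auto_derive; auto. ring.
Qed.

Lemma trig2_bound n a b y :
  Rabs (trig2 n a b y) <= sum1 n (fun k => (2 * PI * INR k) ^ 2 * (Rabs (a k) + Rabs (b k))).
Proof.
  eapply Rle_trans; [apply sum1_abs|]. apply sum1_le. intros k _.
  rewrite Rabs_mult, Rabs_Ropp, Rabs_pos_eq by apply pow2_ge_0.
  apply Rmult_le_compat_l; [apply pow2_ge_0 | apply cos_sin_weighted_bound].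
Qed.

(** * The variational problem *)

Lemma pow2_half_pos x : x <> 0 -> 0 < x ^ 2 / 2.
Proof. intros Hx. rewrite <- Rsqr_pow2. generalize (Rsqr_pos_lt x Hx). lra. Qed.

Lemma dphi_hamiltonian alpha j t : 0 < alpha -> j <> 0 -> 0 < t ->
  j ^ 2 / (2 * Rpower (dphi alpha j t) alpha) = t.
Proof.
  intros Ha Hj Ht. assert (HK := pow2_half_pos j Hj).
  unfold dphi, c_j. rewrite Rpower_div, !Rpower_inv_exp by (auto using Rpower_pos; lra).
  field. lra.
Qed.

Lemma hamiltonian_dphi alpha j m : 0 < alpha -> j <> 0 -> 0 < m ->
  dphi alpha j (j ^ 2 / (2 * Rpower m alpha)) = m.
Proof.
  intros Ha Hj Hm. assert (HK := pow2_half_pos j Hj).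
  assert (HR := Rpower_pos m alpha).
  unfold dphi, c_j. replace (j ^ 2 / (2 * Rpower m alpha)) with ((j ^ 2 / 2) / Rpower m alpha)
    by (field; lra).
  rewrite (Rpower_div (j ^ 2 / 2) (Rpower m alpha)), Rpower_exp_inv by (auto; lra).
  generalize (Rpower_pos (j ^ 2 / 2) (1 / alpha)). intros. field. split; lra.
Qed.

Section Variational.
Variables (alpha j : R) (V : R -> R) (n : nat) (p : nat -> R).
Hypothesis Ha : 0 < alpha <= 2.
Hypothesis HV : C2_T V.
Hypothesis Hp : forall k, (1 <= k <= n)%nat -> p k > 0.

Local Notation phi := (phi_alpha alpha j).
Local Notation dp := (dphi alpha j).
Local Notation J := (Jfun alpha j n V p).

Definition gap a0 a b y := trig n a0 a b y - V y.

Definition penalty (a b : nat -> R) := sum1 n (fun k => / (2 * p k) * (a k ^ 2 + b k ^ 2)).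

(* Stationarity of [J] in every direction [(h0, ha, hb)]. *)
Definition euler_lagrange a0 a b := forall h0 ha hb,
  int01 (fun y => dp (gap a0 a b y) * trig n h0 ha hb y)
  = h0 + sum1 n (fun k => (a k * ha k + b k * hb k) / p k).

Lemma alpha_pos : 0 < alpha.
Proof. lra. Qed.

Lemma V_cont : cont V.
Proof.
  destruct HV as [_ [f1 [f2 [H1 _]]]]. intros x. apply continuity_pt_filterlim.
  apply derivable_continuous_pt. exists (f1 x). apply H1.
Qed.

Lemma gap_cont a0 a b : cont (gap a0 a b).
Proof. apply cont_minus; [apply trig_cont | apply V_cont]. Qed.

Lemma gap_periodic a0 a b : periodic1 (gap a0 a b).
Proof. intros x. unfold gap. rewrite trig_periodic, (proj1 HV). reflexivity. Qed.

Lemma phi_gap_cont a0 a b : inC n V a0 a b -> cont (fun y => phi (gap a0 a b y)).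
Proof.
  intros HC x. apply (continuous_comp (gap a0 a b) phi); [apply gap_cont|].
  apply (phi_cont alpha j alpha_pos). apply HC.
Qed.

Lemma dphi_gap_cont a0 a b : inC n V a0 a b -> cont (fun y => dp (gap a0 a b y)).
Proof.
  intros HC x. apply (continuous_comp (gap a0 a b) dp); [apply gap_cont|].
  apply (dphi_cont alpha j). apply HC.
Qed.

Lemma inC_of_gap_ge a0 a b eps : 0 < eps -> (forall y, eps <= gap a0 a b y) -> inC n V a0 a b.
Proof. intros He H y. specialize (H y). unfold gap in H. lra. Qed.

Lemma Jfun_gap a0 a b : J a0 a b = int01 (fun y => phi (gap a0 a b y)) - a0 - penalty a b.
Proof. reflexivity. Qed.

Lemma gap_ext a0 a b a0' a' b' : coef_eq n a0 a b a0' a' b' ->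
  forall y, gap a0 a b y = gap a0' a' b' y.
Proof. intros H y. unfold gap. rewrite (trig_ext n a0 a b a0' a' b' H). reflexivity. Qed.

Lemma Jfun_ext a0 a b a0' a' b' : coef_eq n a0 a b a0' a' b' -> J a0 a b = J a0' a' b'.
Proof.
  intros H. rewrite !Jfun_gap, (int01_ext _ (fun y => phi (gap a0' a' b' y)))
    by (intros; rewrite (gap_ext _ _ _ _ _ _ H); reflexivity).
  destruct H as [-> H]. unfold penalty. f_equal.
  apply sum1_ext. intros k Hk. destruct (H k Hk) as [-> ->]. reflexivity.
Qed.

Lemma gap_shift a0 a b h0 ha hb s y :
  gap (a0 + s * h0) (fun k => a k + s * ha k) (fun k => b k + s * hb k) y
  = gap a0 a b y + s * trig n h0 ha hb y.
Proof. unfold gap. rewrite trig_scal, <- trig_add. ring. Qed.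

Lemma gap_shift_a0 a0 a b s y : gap (a0 + s) a b y = gap a0 a b y + s.
Proof. unfold gap, trig. ring. Qed.

Lemma gap_sub_abs a0 a b a0' a' b' y :
  Rabs (gap a0' a' b' y - gap a0 a b y)
  <= Rabs (a0' - a0) + sum1 n (fun k => Rabs (a' k - a k) + Rabs (b' k - b k)).
Proof.
  unfold gap. replace (trig n a0' a' b' y - V y - (trig n a0 a b y - V y))
    with (trig n a0' a' b' y - trig n a0 a b y) by ring.
  apply trig_sub_abs.
Qed.

Lemma int01_gap a0 a b : int01 (gap a0 a b) = a0 - int01 V.
Proof. unfold gap. rewrite int01_minus, int01_trig; auto using trig_cont, V_cont. Qed.

Lemma penalty_term_ge0 a b k : (1 <= k <= n)%nat -> 0 <= / (2 * p k) * (a k ^ 2 + b k ^ 2).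
Proof.
  intros Hk. specialize (Hp k Hk). apply Rmult_le_pos.
  - left; apply Rinv_0_lt_compat; lra.
  - apply Rplus_le_le_0_compat; apply pow2_ge_0.
Qed.

Lemma penalty_ge0 a b : 0 <= penalty a b.
Proof. apply sum1_ge0. intros; apply penalty_term_ge0; auto. Qed.

Lemma penalty_ge_term a b k : (1 <= k <= n)%nat -> / (2 * p k) * (a k ^ 2 + b k ^ 2) <= penalty a b.
Proof.
  intros Hk. apply (sum1_ge_term n (fun k => / (2 * p k) * (a k ^ 2 + b k ^ 2))); auto.
  intros; apply penalty_term_ge0; auto.
Qed.

Lemma penalty_eq0 a b : penalty a b = 0 -> forall k, (1 <= k <= n)%nat -> a k = 0 /\ b k = 0.
Proof.
  intros H k Hk. assert (T := penalty_ge_term a b k Hk). rewrite H in T.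
  assert (0 < / (2 * p k)) by (specialize (Hp k Hk); apply Rinv_0_lt_compat; lra).
  assert (Hsq : a k ^ 2 + b k ^ 2 <= 0) by nra.
  assert (Ha2 := pow2_ge_0 (a k)). assert (Hb2 := pow2_ge_0 (b k)).
  split; apply Rsqr_0_uniq; unfold Rsqr; lra.
Qed.

Lemma penalty_shift a b ha hb s :
  penalty (fun k => a k + s * ha k) (fun k => b k + s * hb k) =
  penalty a b + s * sum1 n (fun k => (a k * ha k + b k * hb k) / p k) + s ^ 2 * penalty ha hb.
Proof.
  unfold penalty. rewrite <- !sum1_scal, <- !sum1_plus. apply sum1_ext. intros k Hk.
  specialize (Hp k Hk). field. lra.
Qed.

(* The integrand is nonpositive by concavity, which makes a critical point the unique
   maximizer. *)
Lemma Jfun_sub_of_euler_lagrange a0 a b a0' a' b' :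
  inC n V a0 a b -> euler_lagrange a0 a b -> inC n V a0' a' b' ->
  J a0' a' b' - J a0 a b =
  int01 (fun y => phi (gap a0' a' b' y) - phi (gap a0 a b y)
                  - dp (gap a0 a b y) * (gap a0' a' b' y - gap a0 a b y))
  - penalty (fun k => a' k - a k) (fun k => b' k - b k).
Proof.
  intros HC HE HC'.
  assert (Hd : forall y, gap a0' a' b' y - gap a0 a b y
                         = trig n (a0' - a0) (fun k => a' k - a k) (fun k => b' k - b k) y).
  { intros y. unfold gap. rewrite <- trig_sub. ring. }
  assert (HX := HE (a0' - a0) (fun k => a' k - a k) (fun k => b' k - b k)).
  rewrite (int01_ext (fun y => _ - _ - _)
             (fun y => (phi (gap a0' a' b' y) - phi (gap a0 a b y))
                       - dp (gap a0 a b y) * trig n (a0' - a0) (fun k => a' k - a k)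
                                                       (fun k => b' k - b k) y))
    by (intros; rewrite Hd; reflexivity).
  assert (Hcd := dphi_gap_cont _ _ _ HC).
  rewrite int01_minus, int01_minus, HX;
    auto using phi_gap_cont, cont_minus, cont_mult, trig_cont.
  rewrite !Jfun_gap.
  assert (HQ : penalty a' b' - penalty a b
               = sum1 n (fun k => (a k * (a' k - a k) + b k * (b' k - b k)) / p k)
                 + penalty (fun k => a' k - a k) (fun k => b' k - b k)).
  { unfold penalty. rewrite <- sum1_plus, <- sum1_minus. apply sum1_ext. intros k Hk.
    specialize (Hp k Hk). field. lra. }
  lra.
Qed.

Lemma tangent_defect_le0 a0 a b a0' a' b' y : inC n V a0 a b -> inC n V a0' a' b' ->
  phi (gap a0' a' b' y) - phi (gap a0 a b y) - dp (gap a0 a b y) * (gap a0' a' b' y - gap a0 a b y) <= 0.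
Proof.
  intros HC HC'. assert (T := phi_tangent alpha j alpha_pos _ _ (HC' y) (HC y)).
  unfold gap in *. lra.
Qed.

Lemma euler_lagrange_max_unique a0 a b a0' a' b' :
  inC n V a0 a b -> euler_lagrange a0 a b -> inC n V a0' a' b' ->
  J a0 a b <= J a0' a' b' -> coef_eq n a0' a' b' a0 a b.
Proof.
  intros HC HE HC' Hle. assert (H := Jfun_sub_of_euler_lagrange _ _ _ _ _ _ HC HE HC').
  set (D := int01 _) in H.
  assert (Hcd : cont (fun y => phi (gap a0' a' b' y) - phi (gap a0 a b y)
                               - dp (gap a0 a b y) * (gap a0' a' b' y - gap a0 a b y))).
  { apply cont_minus; [apply cont_minus|apply cont_mult]; auto using phi_gap_cont, dphi_gap_cont.
    apply cont_minus; apply gap_cont. }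
  assert (HD : D <= 0).
  { unfold D. rewrite <- (int01_const 0). apply int01_le; auto using cont_const.
    intros; apply tangent_defect_le0; auto. }
  assert (HS0 := penalty_ge0 (fun k => a' k - a k) (fun k => b' k - b k)).
  assert (Hab : forall k, (1 <= k <= n)%nat -> a' k = a k /\ b' k = b k).
  { intros k Hk.
    destruct (penalty_eq0 (fun k => a' k - a k) (fun k => b' k - b k) ltac:(lra) k Hk).
    split; lra. }
  split; [|exact Hab].
  destruct (Req_dec a0' a0) as [|Hne]; auto. exfalso.
  assert (Hdc : forall y, gap a0' a' b' y = gap a0 a b y + (a0' - a0)).
  { intros y. rewrite <- gap_shift_a0. apply gap_ext. split; [ring|].
    intros k Hk. destruct (Hab k Hk); split; auto. }
  assert (Hneg : 0 < int01 (fun y => - (phi (gap a0' a' b' y) - phi (gap a0 a b y)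
                          - dp (gap a0 a b y) * (gap a0' a' b' y - gap a0 a b y)))).
  { apply int01_gt0; [apply cont_opp; auto|]. intros y _.
    assert (NE : gap a0' a' b' y <> gap a0 a b y) by (rewrite Hdc; lra).
    assert (T := phi_tangent_strict alpha j alpha_pos _ _ (HC' y) (HC y) NE).
    unfold gap in *. lra. }
  rewrite int01_opp in Hneg by auto. fold D in Hneg. lra.
Qed.

Lemma first_variation_bound a0 a b eps h0 ha hb : 0 < eps -> (forall y, eps <= gap a0 a b y) ->
  (forall a0' a' b', inC n V a0' a' b' -> J a0' a' b' <= J a0 a b) ->
  exists K s0, 0 < s0 /\ forall s, Rabs s <= s0 ->
    s * (int01 (fun y => dp (gap a0 a b y) * trig n h0 ha hb y)
         - (h0 + sum1 n (fun k => (a k * ha k + b k * hb k) / p k))) <= K * s ^ 2.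
Proof.
  intros He Ht Hmax.
  assert (HC := inC_of_gap_ge _ _ _ _ He Ht).
  set (w := trig n h0 ha hb).
  set (W := Rabs h0 + sum1 n (fun k => Rabs (ha k) + Rabs (hb k)) + 1).
  assert (HW1 : 1 <= W).
  { assert (0 <= sum1 n (fun k => Rabs (ha k) + Rabs (hb k))).
    { apply sum1_ge0. intros. generalize (Rabs_pos (ha k)) (Rabs_pos (hb k)); lra. }
    generalize (Rabs_pos h0); unfold W; lra. }
  assert (Hw : forall y, Rabs (w y) <= W)
    by (intros y; generalize (trig_abs n h0 ha hb y); unfold W, w; lra).
  set (L := dphi_lip_const alpha j (eps / 2)).
  exists (L * W ^ 2 + penalty ha hb), (eps / (2 * W)).
  split; [apply Rdiv_lt_0_compat; lra|]. intros s Hs.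
  assert (Hpert : forall y, eps / 2 <= gap a0 a b y + s * w y /\
            dp (gap a0 a b y) * (s * w y) - L * W ^ 2 * s ^ 2
            <= phi (gap a0 a b y + s * w y) - phi (gap a0 a b y))
    by (intros y; apply phi_perturb_lower; auto; lra).
  assert (HCs : inC n V (a0 + s * h0) (fun k => a k + s * ha k) (fun k => b k + s * hb k)).
  { apply (inC_of_gap_ge _ _ _ (eps / 2)); [lra|]. intros y. rewrite gap_shift. apply Hpert. }
  assert (HJ := Hmax _ _ _ HCs). rewrite !Jfun_gap, penalty_shift in HJ.
  assert (Hpt : forall y, s * (dp (gap a0 a b y) * w y) - L * W ^ 2 * s ^ 2
              <= phi (gap (a0 + s * h0) (fun k => a k + s * ha k) (fun k => b k + s * hb k) y)
                 - phi (gap a0 a b y))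
    by (intros y; rewrite gap_shift; fold w; destruct (Hpert y) as [_ P]; lra).
  assert (HI : s * int01 (fun y => dp (gap a0 a b y) * w y) - L * W ^ 2 * s ^ 2
               <= int01 (fun y => phi (gap (a0 + s * h0) (fun k => a k + s * ha k)
                                              (fun k => b k + s * hb k) y))
                  - int01 (fun y => phi (gap a0 a b y))).
  { assert (Cdw : cont (fun y => dp (gap a0 a b y) * w y))
      by (apply cont_mult; [apply dphi_gap_cont; auto | apply trig_cont]).
    rewrite <- int01_minus, <- int01_scal, <- (int01_const (L * W ^ 2 * s ^ 2)), <- int01_minus;
      auto using phi_gap_cont, cont_const, cont_scal.
    apply int01_le; [apply cont_minus | apply cont_minus | intros y _; apply Hpt];
      auto using cont_scal, cont_const, phi_gap_cont. }
  fold w. lra.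
Qed.

Lemma euler_lagrange_of_max a0 a b eps : 0 < eps -> (forall y, eps <= gap a0 a b y) ->
  (forall a0' a' b', inC n V a0' a' b' -> J a0' a' b' <= J a0 a b) ->
  euler_lagrange a0 a b.
Proof.
  intros He Ht Hmax h0 ha hb.
  destruct (first_variation_bound a0 a b eps h0 ha hb He Ht Hmax) as [K [s0 [Hs0 Hvar]]].
  set (X := int01 _). set (G := h0 + _).
  fold X G in Hvar.
  assert (H1 : X - G <= 0).
  { apply (le0_of_le_linear _ K s0 Hs0). intros s [Hs Hs'].
    assert (Hk := Hvar s ltac:(rewrite Rabs_pos_eq; lra)).
    apply (Rmult_le_reg_l s); auto. nra. }
  assert (H2 : G - X <= 0).
  { apply (le0_of_le_linear _ K s0 Hs0). intros s [Hs Hs'].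
    assert (Hk := Hvar (- s) ltac:(rewrite Rabs_Ropp, Rabs_pos_eq; lra)).
    apply (Rmult_le_reg_l s); auto. nra. }
  lra.
Qed.

Lemma gap_quadratic_growth R' : 0 <= R' -> exists M, 1 <= M /\ forall a0 a b,
  (forall k, (1 <= k <= n)%nat -> Rabs (a k) <= R' /\ Rabs (b k) <= R') ->
  forall y0, 0 <= y0 <= 1 -> (forall y, gap a0 a b y0 <= gap a0 a b y) ->
  forall y, 0 <= y <= 1 -> gap a0 a b y <= gap a0 a b y0 + M * (y - y0) ^ 2.
Proof.
  intros HR. destruct HV as [_ [V1 [V2 [HV1 [HV2 HV2c]]]]].
  destruct (continuity_ab_maj (fun x => Rabs (V2 x)) 0 1) as [xm [Hxm _]]; [lra| |].
  { intros c _. apply (continuity_pt_comp V2 Rabs); [apply HV2c | apply Rcontinuity_abs]. }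
  set (MT := sum1 n (fun k => (2 * PI * INR k) ^ 2 * (2 * R'))).
  assert (HMT : 0 <= MT) by (apply sum1_ge0; intros; apply Rmult_le_pos; [apply pow2_ge_0 | lra]).
  assert (HMV := Rabs_pos (V2 xm)).
  exists (MT + Rabs (V2 xm) + 1). split; [lra|].
  intros a0 a b Hab y0 Hy0 Hmin.
  apply (le_quadratic_at_min _ (fun y => trig1 n a b y - V1 y) (fun y => trig2 n a b y - V2 y)
           _ y0); auto.
  - intros y. apply derivable_pt_lim_minus; [apply trig_derive | apply HV1].
  - intros y. apply derivable_pt_lim_minus; [apply trig1_derive | apply HV2].
  - intros z Hz. unfold Rminus. eapply Rle_trans; [apply Rabs_triang|]. rewrite Rabs_Ropp.
    assert (Rabs (V2 z) <= Rabs (V2 xm)) by (apply Hxm; lra).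
    assert (Rabs (trig2 n a b z) <= MT).
    { eapply Rle_trans; [apply trig2_bound|]. apply sum1_le. intros k Hk.
      apply Rmult_le_compat_l; [apply pow2_ge_0|]. destruct (Hab k Hk); lra. }
    lra.
Qed.

Lemma Jfun_increases_near_boundary M a0 a b y0 : 1 <= M -> inC n V a0 a b -> 0 <= y0 <= 1 ->
  (forall y, gap a0 a b y0 <= gap a0 a b y) -> gap a0 a b y0 < boundary_level alpha j M ->
  (forall y, 0 <= y <= 1 -> gap a0 a b y <= gap a0 a b y0 + M * (y - y0) ^ 2) ->
  J a0 a b < J (a0 + (boundary_level alpha j M - gap a0 a b y0)) a b.
Proof.
  intros HM HC Hy0 Hmin Hlt Hgrow.
  set (s := boundary_level alpha j M - gap a0 a b y0).
  assert (Hs : 0 < s) by (unfold s; lra).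
  assert (HC' : inC n V (a0 + s) a b).
  { intros y. specialize (HC y). assert (E := gap_shift_a0 a0 a b s y). unfold gap in E. lra. }
  assert (Hgt : 1 < int01 (fun y => dp (gap (a0 + s) a b y))).
  { apply (int01_dphi_gt1 alpha j M _ y0); auto using gap_cont.
    intros y Hy. rewrite gap_shift_a0. specialize (Hgrow y Hy). unfold s. lra. }
  assert (HI : s * int01 (fun y => dp (gap (a0 + s) a b y))
               <= int01 (fun y => phi (gap (a0 + s) a b y)) - int01 (fun y => phi (gap a0 a b y))).
  { rewrite <- int01_minus, <- int01_scal by auto using phi_gap_cont, dphi_gap_cont.
    apply int01_le;
      [apply cont_scal, dphi_gap_cont; auto | apply cont_minus; apply phi_gap_cont; auto |].
    intros y _. rewrite gap_shift_a0.
    assert (T := phi_tangent alpha j alpha_pos (gap a0 a b y) (gap a0 a b y + s) (HC y)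
                   ltac:(rewrite <- gap_shift_a0; apply HC')).
    lra. }
  rewrite !Jfun_gap. nra.
Qed.

Lemma Jfun_coercive : exists A0, forall a0 a b, inC n V a0 a b ->
  J a0 a b <= A0 - int01 V / 2 - a0 / 2 - penalty a b /\ int01 V < a0.
Proof.
  destruct (phi_le_affine alpha j alpha_pos) as [A0 HA]. exists A0. intros a0 a b HC.
  assert (Hint := int01_gap a0 a b).
  split.
  - rewrite Jfun_gap.
    assert (int01 (fun y => phi (gap a0 a b y)) <= int01 (fun y => A0 + / 2 * gap a0 a b y)).
    { apply int01_le;
        [apply phi_gap_cont; auto | apply cont_plus, cont_scal, gap_cont; apply cont_const |].
      intros y _. specialize (HA _ (HC y)). unfold gap. lra. }
    rewrite int01_plus, int01_const, int01_scal, Hint in H by auto using cont_const, cont_scal, gap_cont.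
    lra.
  - assert (0 < int01 (gap a0 a b)) by (apply int01_gt0; [apply gap_cont | intros y _; apply HC]).
    lra.
Qed.

Lemma Jfun_superlevel_bounded J0 : exists R0, 0 <= R0 /\ forall a0 a b, inC n V a0 a b ->
  J0 <= J a0 a b ->
  Rabs a0 <= R0 /\ forall k, (1 <= k <= n)%nat -> Rabs (a k) <= R0 /\ Rabs (b k) <= R0.
Proof.
  destruct Jfun_coercive as [A0 HA].
  set (IV := int01 V). set (B := A0 - IV / 2 - J0). set (P := sum1 n p).
  assert (HP : 0 <= P) by (apply sum1_ge0; intros k Hk; specialize (Hp k Hk); lra).
  assert (HPB : 0 <= 2 * P * Rabs (B - IV / 2)) by (generalize (Rabs_pos (B - IV / 2)); nra).
  exists (Rabs (2 * B) + Rabs IV + 2 * P * Rabs (B - IV / 2) + 1).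
  generalize (Rabs_pos (2 * B)) (Rabs_pos IV). intros P1 P2.
  split; [lra|]. intros a0 a b HC HJ. destruct (HA a0 a b HC) as [H1 H2]. fold IV in H1, H2.
  assert (HQ : penalty a b <= Rabs (B - IV / 2)).
  { eapply Rle_trans; [|apply Rle_abs]. assert (H0 := penalty_ge0 a b). unfold B. lra. }
  split.
  - assert (a0 <= 2 * B) by (generalize (penalty_ge0 a b); unfold B; lra).
    assert (Rabs a0 <= Rabs (2 * B) + Rabs IV).
    { unfold Rabs at 1. destruct (Rcase_abs a0).
      - generalize (Rle_abs (- IV)); rewrite Rabs_Ropp; lra.
      - generalize (Rle_abs (2 * B)); lra. }
    lra.
  - intros k Hk. assert (Hpk := Hp k Hk).
    assert (Hterm := penalty_ge_term a b k Hk).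
    assert (Hpp : p k <= P)
      by (apply (sum1_ge_term n p); auto; intros i Hi; specialize (Hp i Hi); lra).
    assert (Hsq : a k ^ 2 + b k ^ 2 <= 2 * P * Rabs (B - IV / 2)).
    { assert (a k ^ 2 + b k ^ 2 <= 2 * p k * penalty a b).
      { apply (Rmult_le_reg_l (/ (2 * p k))); [apply Rinv_0_lt_compat; lra|].
        replace (/ (2 * p k) * (2 * p k * penalty a b)) with (penalty a b) by (field; lra). lra. }
      assert (2 * p k * penalty a b <= 2 * P * Rabs (B - IV / 2))
        by (apply Rmult_le_compat; try lra; apply penalty_ge0).
      lra. }
    assert (Hsq_abs : forall x, Rabs x <= x ^ 2 + 1)
      by (intros x; rewrite <- (pow2_abs x); generalize (Rabs_pos x); nra).
    generalize (Hsq_abs (a k)) (Hsq_abs (b k)) (pow2_ge_0 (a k)) (pow2_ge_0 (b k)). intros.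
    split; lra.
Qed.

Lemma int01_phi_gap_lip a0 a b a0' a' b' eps : 0 < eps ->
  (forall y, eps <= gap a0 a b y) -> (forall y, eps <= gap a0' a' b' y) ->
  Rabs (int01 (fun y => phi (gap a0' a' b' y)) - int01 (fun y => phi (gap a0 a b y)))
  <= dp eps * (Rabs (a0' - a0) + sum1 n (fun k => Rabs (a' k - a k) + Rabs (b' k - b k))).
Proof.
  intros He H1 H2.
  assert (HC := inC_of_gap_ge _ _ _ _ He H1). assert (HC' := inC_of_gap_ge _ _ _ _ He H2).
  rewrite <- int01_minus by (apply phi_gap_cont; auto).
  eapply Rle_trans; [apply int01_abs, cont_minus; apply phi_gap_cont; auto|].
  rewrite <- (int01_const (dp eps * _)).
  apply int01_le; [apply cont_abs, cont_minus; apply phi_gap_cont; auto | apply cont_const |].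
  intros y _. eapply Rle_trans; [apply (phi_lip alpha j alpha_pos _ _ eps He (H2 y) (H1 y))|].
  apply Rmult_le_compat_l; [left; apply dphi_pos | apply gap_sub_abs].
Qed.

Lemma penalty_lip a b a' b' B d : 0 <= d ->
  (forall k, (1 <= k <= n)%nat -> Rabs (a k) <= B /\ Rabs (b k) <= B /\
     Rabs (a' k) <= B /\ Rabs (b' k) <= B /\ Rabs (a' k - a k) <= d /\ Rabs (b' k - b k) <= d) ->
  Rabs (penalty a' b' - penalty a b) <= 4 * B * d * sum1 n (fun k => / (2 * p k)).
Proof.
  intros Hd H. unfold penalty. rewrite <- sum1_minus, <- sum1_scal.
  eapply Rle_trans; [apply sum1_abs|]. apply sum1_le. intros k Hk.
  destruct (H k Hk) as [H1 [H2 [H3 [H4 [H5 H6]]]]]. assert (Hpk := Hp k Hk).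
  assert (Hi : 0 < / (2 * p k)) by (apply Rinv_0_lt_compat; lra).
  replace (/ (2 * p k) * (a' k ^ 2 + b' k ^ 2) - / (2 * p k) * (a k ^ 2 + b k ^ 2))
    with (/ (2 * p k) * ((a' k - a k) * (a' k + a k) + (b' k - b k) * (b' k + b k))) by ring.
  rewrite Rabs_mult, (Rabs_pos_eq (/ (2 * p k))) by lra.
  rewrite (Rmult_comm (4 * B * d)). apply Rmult_le_compat_l; [lra|].
  eapply Rle_trans; [apply Rabs_triang|]. rewrite !Rabs_mult.
  assert (Rabs (a' k + a k) <= 2 * B) by (eapply Rle_trans; [apply Rabs_triang | lra]).
  assert (Rabs (b' k + b k) <= 2 * B) by (eapply Rle_trans; [apply Rabs_triang | lra]).
  assert (Rabs (a' k - a k) * Rabs (a' k + a k) <= d * (2 * B))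
    by (apply Rmult_le_compat; auto using Rabs_pos).
  assert (Rabs (b' k - b k) * Rabs (b' k + b k) <= d * (2 * B))
    by (apply Rmult_le_compat; auto using Rabs_pos).
  lra.
Qed.

(* Coefficient vectors [(a0, a1..an, b1..bn)] as sequences [u] supported on [0..2n]:
   [a0 = u 0], [a k = u k] and [b k = u (n + k)]. *)
Definition coef_b (u : nat -> R) (k : nat) := u (n + k)%nat.

Definition vec_of_coefs (a0 : R) (a b : nat -> R) (i : nat) : R :=
  if Nat.eq_dec i 0 then a0
  else if le_lt_dec i n then a i
  else if le_lt_dec i (2 * n) then b (i - n)%nat else 0.

Lemma vec_of_coefs_coef_eq a0 a b :
  coef_eq n (vec_of_coefs a0 a b 0) (vec_of_coefs a0 a b) (coef_b (vec_of_coefs a0 a b)) a0 a b.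
Proof.
  split; [reflexivity|]. intros k Hk. unfold coef_b, vec_of_coefs. split.
  - destruct (Nat.eq_dec k 0); [lia|]. destruct (le_lt_dec k n); [auto | lia].
  - destruct (Nat.eq_dec (n + k) 0); [lia|]. destruct (le_lt_dec (n + k) n); [lia|].
    destruct (le_lt_dec (n + k) (2 * n)); [|lia]. f_equal. lia.
Qed.

Definition region (B eps : R) (u : nat -> R) : Prop :=
  (forall i, (2 * n < i)%nat -> u i = 0) /\
  (forall i, (i <= 2 * n)%nat -> Rabs (u i) <= B) /\
  (forall y, eps <= gap (u 0%nat) u (coef_b u) y).

Lemma region_of_coefs B eps a0 a b : Rabs a0 <= B ->
  (forall k, (1 <= k <= n)%nat -> Rabs (a k) <= B /\ Rabs (b k) <= B) ->
  (forall y, eps <= gap a0 a b y) ->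
  region B eps (vec_of_coefs a0 a b) /\
  J (vec_of_coefs a0 a b 0) (vec_of_coefs a0 a b) (coef_b (vec_of_coefs a0 a b)) = J a0 a b.
Proof.
  intros H0 Hab Hgap. assert (E := vec_of_coefs_coef_eq a0 a b).
  split; [split; [|split] | apply Jfun_ext; auto].
  - intros i Hi. unfold vec_of_coefs. destruct (Nat.eq_dec i 0); [lia|].
    destruct (le_lt_dec i n); [lia|]. destruct (le_lt_dec i (2 * n)); [lia | reflexivity].
  - intros i Hi. unfold vec_of_coefs. destruct (Nat.eq_dec i 0); auto.
    destruct (le_lt_dec i n); [apply Hab; lia|].
    destruct (le_lt_dec i (2 * n)); [apply Hab; lia | lia].
  - intros y. rewrite (gap_ext _ _ _ _ _ _ E). apply Hgap.
Qed.

Lemma coef_dist_le (u v : nat -> R) d : (forall i, (i <= 2 * n)%nat -> Rabs (v i - u i) < d) ->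
  Rabs (v 0%nat - u 0%nat) + sum1 n (fun k => Rabs (v k - u k) + Rabs (coef_b v k - coef_b u k))
  <= (2 * INR n + 1) * d.
Proof.
  intros H. assert (H0 := H 0%nat ltac:(lia)).
  assert (sum1 n (fun k => Rabs (v k - u k) + Rabs (coef_b v k - coef_b u k))
          <= sum1 n (fun _ => 2 * d)).
  { apply sum1_le. intros k Hk. unfold coef_b.
    assert (H1 := H k ltac:(lia)). assert (H2 := H (n + k)%nat ltac:(lia)). lra. }
  rewrite sum1_const in H1. lra.
Qed.

Lemma region_closed B eps u : (forall i, (2 * n < i)%nat -> u i = 0) ->
  (forall e, 0 < e -> exists v, region B eps v /\
     forall i, (i <= 2 * n)%nat -> Rabs (v i - u i) < e) ->
  region B eps u.
Proof.
  intros Hz Happ. split; [auto | split].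
  - intros i Hi. apply Rle_plus_epsilon. intros e He.
    destruct (Happ e He) as [v [[_ [Hb _]] Hv]].
    specialize (Hv i Hi). specialize (Hb i Hi).
    assert (Rabs (u i) <= Rabs (v i) + Rabs (v i - u i)).
    { replace (u i) with (v i + - (v i - u i)) at 1 by ring.
      eapply Rle_trans; [apply Rabs_triang|]. rewrite Rabs_Ropp. lra. }
    lra.
  - intros y. apply Rle_plus_epsilon. intros e He.
    set (e' := e / (2 * INR n + 1)). assert (Hn := pos_INR n).
    assert (He' : 0 < e') by (apply Rdiv_lt_0_compat; lra).
    destruct (Happ e' He') as [v [[_ [_ Ht]] Hv]].
    assert (HD := coef_dist_le u v e' Hv).
    assert (HC := gap_sub_abs (u 0%nat) u (coef_b u) (v 0%nat) v (coef_b v) y).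
    assert (Ee : (2 * INR n + 1) * e' = e) by (unfold e'; field; lra).
    specialize (Ht y). apply Rabs_le_between in HC. lra.
Qed.

Lemma Jfun_region_continuous B eps u : 0 < eps -> region B eps u ->
  forall e, 0 < e -> exists d, 0 < d /\ forall v, region B eps v ->
    (forall i, (i <= 2 * n)%nat -> Rabs (v i - u i) < d) ->
    Rabs (J (v 0%nat) v (coef_b v) - J (u 0%nat) u (coef_b u)) < e.
Proof.
  intros He [Hzu [Hbu Htu]] e Hepos.
  set (Pinv := sum1 n (fun k => / (2 * p k))).
  assert (HPinv : 0 <= Pinv)
    by (apply sum1_ge0; intros k Hk; specialize (Hp k Hk); left; apply Rinv_0_lt_compat; lra).
  assert (HB : 0 <= B) by (eapply Rle_trans; [apply Rabs_pos | apply (Hbu 0%nat); lia]).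
  assert (Hn := pos_INR n). assert (Hdp := dphi_pos alpha j eps).
  set (Lc := dp eps * (2 * INR n + 1) + 1 + 4 * B * Pinv).
  assert (HLc : 0 <= Lc).
  { assert (0 <= dp eps * (2 * INR n + 1)) by (apply Rmult_le_pos; lra).
    assert (0 <= 4 * B * Pinv) by (apply Rmult_le_pos; lra). unfold Lc; lra. }
  exists (e / (Lc + 1)). split; [apply Rdiv_lt_0_compat; lra|].
  intros v [Hzv [Hbv Htv]] Hv. set (d := e / (Lc + 1)) in *.
  assert (Hd0 : 0 < d) by (apply Rdiv_lt_0_compat; lra).
  assert (HP := int01_phi_gap_lip _ _ _ _ _ _ eps He Htu Htv).
  assert (HD := coef_dist_le u v d Hv).
  assert (HQ : Rabs (penalty v (coef_b v) - penalty u (coef_b u)) <= 4 * B * d * Pinv).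
  { apply penalty_lip; [lra|]. intros k Hk. unfold coef_b.
    repeat split; try (apply Hbu; lia); try (apply Hbv; lia); left; apply Hv; lia. }
  assert (H0 := Hv 0%nat ltac:(lia)).
  rewrite !Jfun_gap.
  set (dPhi := int01 (fun y => phi (gap (v 0%nat) v (coef_b v) y))
               - int01 (fun y => phi (gap (u 0%nat) u (coef_b u) y))) in HP.
  replace (_ - _) with (dPhi - (v 0%nat - u 0%nat) - (penalty v (coef_b v) - penalty u (coef_b u)))
    by (unfold dPhi; ring).
  assert (Habs3 : forall x y z, Rabs (x - y - z) <= Rabs x + Rabs y + Rabs z).
  { intros x y z. unfold Rminus. eapply Rle_trans; [apply Rabs_triang|].
    rewrite Rabs_Ropp. generalize (Rabs_triang x (- y)). rewrite Rabs_Ropp. lra. }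
  eapply Rle_lt_trans; [apply Habs3|].
  assert (Hlt : Lc * d < e).
  { unfold d. apply (Rmult_lt_reg_r (Lc + 1)); [lra|]. unfold Rdiv.
    replace (Lc * (e * / (Lc + 1)) * (Lc + 1)) with (Lc * e) by (field; lra). nra. }
  assert (dp eps * (Rabs (v 0%nat - u 0%nat) + sum1 n (fun k => Rabs (v k - u k)
            + Rabs (coef_b v k - coef_b u k))) <= dp eps * ((2 * INR n + 1) * d))
    by (apply Rmult_le_compat_l; lra).
  unfold Lc in Hlt. nra.
Qed.

Lemma region_max B eps : 0 < eps -> (exists u, region B eps u) ->
  exists u, region B eps u /\ forall v, region B eps v ->
    J (v 0%nat) v (coef_b v) <= J (u 0%nat) u (coef_b u).
Proof.
  intros He Hne.
  apply (CompactMax.closed_bounded_max (2 * n) (fun u => J (u 0%nat) u (coef_b u)) _ B Hne).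
  - intros v [_ [Hb _]]; auto.
  - intros v [Hz _]; auto.
  - intros u Hz Happ. apply region_closed; auto.
  - intros u Hu. apply Jfun_region_continuous; auto.
Qed.

(* Either the point itself or its [a0]-shift from [Jfun_increases_near_boundary] lies
   in the region. *)
Lemma region_dominates J0 R0 M a0 a b : 0 <= R0 -> 1 <= M ->
  (forall a0 a b, inC n V a0 a b -> J0 <= J a0 a b ->
     Rabs a0 <= R0 /\ forall k, (1 <= k <= n)%nat -> Rabs (a k) <= R0 /\ Rabs (b k) <= R0) ->
  (forall a0 a b, (forall k, (1 <= k <= n)%nat -> Rabs (a k) <= R0 + 1 /\ Rabs (b k) <= R0 + 1) ->
     forall y0, 0 <= y0 <= 1 -> (forall y, gap a0 a b y0 <= gap a0 a b y) ->
     forall y, 0 <= y <= 1 -> gap a0 a b y <= gap a0 a b y0 + M * (y - y0) ^ 2) ->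
  inC n V a0 a b -> J0 <= J a0 a b ->
  exists u, region (R0 + 1) (boundary_level alpha j M) u /\ J a0 a b <= J (u 0%nat) u (coef_b u).
Proof.
  intros HR0 HM Hbd Hgrow HC HJ.
  destruct (boundary_level_bounds alpha j M HM) as [He1 He2].
  set (eps := boundary_level alpha j M) in *.
  destruct (Hbd a0 a b HC HJ) as [Hb0 Hbk].
  assert (Hbk1 : forall k, (1 <= k <= n)%nat -> Rabs (a k) <= R0 + 1 /\ Rabs (b k) <= R0 + 1)
    by (intros k Hk; destruct (Hbk k Hk); split; lra).
  destruct (periodic1_min _ (gap_periodic a0 a b) (gap_cont a0 a b)) as [y0 [Hy0 Hmin]].
  destruct (Rle_or_lt eps (gap a0 a b y0)) as [Hge|Hlt].
  - destruct (region_of_coefs (R0 + 1) eps a0 a b ltac:(lra) Hbk1) as [Hreg HJu];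
      [intros y; specialize (Hmin y); lra|].
    eexists; split; [exact Hreg | rewrite HJu; lra].
  - assert (Hinc := Jfun_increases_near_boundary M a0 a b y0 HM HC Hy0 Hmin Hlt
                      (Hgrow a0 a b Hbk1 y0 Hy0 Hmin)).
    fold eps in Hinc. assert (Hd0 : 0 < gap a0 a b y0) by apply HC.
    destruct (region_of_coefs (R0 + 1) eps (a0 + (eps - gap a0 a b y0)) a b) as [Hreg HJu].
    + eapply Rle_trans; [apply Rabs_triang|]. rewrite (Rabs_pos_eq (eps - _)) by lra. lra.
    + exact Hbk1.
    + intros y. rewrite gap_shift_a0. specialize (Hmin y). lra.
    + eexists; split; [exact Hreg | rewrite HJu; lra].
Qed.

Lemma exists_maximizer : exists a0s as_ bs, inC n V a0s as_ bs /\ euler_lagrange a0s as_ bs /\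
  forall a0 a b, inC n V a0 a b -> J a0 a b <= J a0s as_ bs.
Proof.
  destruct (periodic1_max V (proj1 HV) V_cont) as [xm HVm].
  set (a00 := V xm + 1).
  assert (Hgap0 : forall y, 1 <= gap a00 (fun _ => 0) (fun _ => 0) y)
    by (intros y; unfold gap; rewrite trig_const; specialize (HVm y); unfold a00; lra).
  assert (HC0 := inC_of_gap_ge _ _ _ 1 ltac:(lra) Hgap0).
  set (J0 := J a00 (fun _ => 0) (fun _ => 0)).
  destruct (Jfun_superlevel_bounded J0) as [R0 [HR0 Hbd]].
  destruct (gap_quadratic_growth (R0 + 1) ltac:(lra)) as [M [HM Hgrow]].
  destruct (boundary_level_bounds alpha j M HM) as [He1 He2].
  set (eps := boundary_level alpha j M) in *.
  destruct (region_dominates J0 R0 M a00 _ _ HR0 HM Hbd Hgrow HC0 (Rle_refl _))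
    as [u0 [Hu0 HJu0]].
  destruct (region_max (R0 + 1) eps He1 (ex_intro _ u0 Hu0)) as [u [[Hz [Hb Hgap]] Hmax]].
  exists (u 0%nat), u, (coef_b u).
  assert (Hglob : forall a0 a b, inC n V a0 a b -> J a0 a b <= J (u 0%nat) u (coef_b u)).
  { intros a0 a b HC. destruct (Rle_or_lt (J a0 a b) J0) as [Hle|Hgt].
    - assert (J0 <= J (u 0%nat) u (coef_b u)) by (eapply Rle_trans; [exact HJu0 | apply Hmax; auto]).
      lra.
    - destruct (region_dominates J0 R0 M a0 a b HR0 HM Hbd Hgrow HC ltac:(lra)) as [v [Hv HJv]].
      eapply Rle_trans; [exact HJv | apply Hmax; auto]. }
  split; [apply (inC_of_gap_ge _ _ _ eps); auto | split; auto].
  apply (euler_lagrange_of_max _ _ _ eps); auto.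
Qed.

Lemma euler_lagrange_iff_moments a0 a b : inC n V a0 a b ->
  euler_lagrange a0 a b <->
  int01 (fun y => dp (gap a0 a b y)) = 1 /\
  forall k, (1 <= k <= n)%nat ->
    int01 (fun y => dp (gap a0 a b y) * cosk k y) = a k / p k /\
    int01 (fun y => dp (gap a0 a b y) * sink k y) = b k / p k.
Proof.
  intros HC. split.
  - intros HE. split.
    + assert (H := HE 1 (fun _ => 0) (fun _ => 0)).
      rewrite (int01_ext _ (fun y => dp (gap a0 a b y))) in H by (intros; rewrite trig_const; ring).
      rewrite H, (sum1_ext _ _ (fun _ => 0)), sum1_const; [ring|].
      intros k Hk. specialize (Hp k Hk). field. lra.
    + intros k Hk. split.
      * assert (H := HE 0 (fun i => if Nat.eq_dec i k then 1 else 0) (fun _ => 0)).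
        rewrite (int01_ext _ (fun y => dp (gap a0 a b y) * cosk k y)) in H
          by (intros; rewrite trig_unit_cos; auto).
        rewrite H, (sum1_ext _ _ (fun i => if Nat.eq_dec i k then a i / p i else 0)).
        -- rewrite sum1_delta; auto. ring.
        -- intros i Hi. specialize (Hp i Hi). destruct (Nat.eq_dec i k); field; lra.
      * assert (H := HE 0 (fun _ => 0) (fun i => if Nat.eq_dec i k then 1 else 0)).
        rewrite (int01_ext _ (fun y => dp (gap a0 a b y) * sink k y)) in H
          by (intros; rewrite trig_unit_sin; auto).
        rewrite H, (sum1_ext _ _ (fun i => if Nat.eq_dec i k then b i / p i else 0)).
        -- rewrite sum1_delta; auto. ring.
        -- intros i Hi. specialize (Hp i Hi). destruct (Nat.eq_dec i k); field; lra.
  - intros [H1 Hk] h0 ha hb. rewrite int01_mul_trig, H1 by (apply dphi_gap_cont; auto).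
    rewrite Rmult_1_r. f_equal. apply sum1_ext. intros k Hk'. destruct (Hk k Hk') as [-> ->].
    specialize (Hp k Hk'). field. lra.
Qed.

Local Notation kernel := (fun x => sum0 n (fun k => p k * cos (2 * PI * INR k * x))).

Lemma int01_kernel_conv (m : R -> R) x : cont m ->
  int01 (fun y => kernel (x - y) * m y) =
  p 0%nat * int01 m
  + sum1 n (fun k => p k * int01 (fun y => m y * cosk k y) * cos (2 * PI * INR k * x)
                     + p k * int01 (fun y => m y * sink k y) * sin (2 * PI * INR k * x)).
Proof.
  intros Hm.
  rewrite (int01_ext _ (fun y => m y * trig n (p 0%nat)
             (fun k => p k * cos (2 * PI * INR k * x)) (fun k => p k * sin (2 * PI * INR k * x)) y)).
  - rewrite int01_mul_trig by auto. rewrite Rmult_comm. f_equal.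
    apply sum1_ext. intros; ring.
  - intros y. unfold sum0, trig. simpl INR. rewrite Rmult_0_r, Rmult_0_l, cos_0, Rmult_1_r.
    rewrite Rmult_comm. f_equal. f_equal. apply sum1_ext. intros k _.
    replace (2 * PI * INR k * (x - y)) with (2 * PI * INR k * x - 2 * PI * INR k * y) by ring.
    rewrite cos_minus. ring.
Qed.

Lemma solves_P_of_maximizer a0 a b m H : j <> 0 -> inC n V a0 a b -> euler_lagrange a0 a b ->
  (forall x, m x = dp (gap a0 a b x)) -> H = a0 - p 0%nat ->
  solves_P alpha j V kernel m H.
Proof.
  intros Hj HC HE Hm ->.
  destruct (proj1 (euler_lagrange_iff_moments a0 a b HC) HE) as [H1 Hk].
  assert (Hext : forall g, int01 (fun y => m y * g y) = int01 (fun y => dp (gap a0 a b y) * g y))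
    by (intros; apply int01_ext; intros; rewrite Hm; reflexivity).
  assert (Hmc : cont m).
  { replace m with (fun y => dp (gap a0 a b y)) by (apply functional_extensionality; auto).
    apply dphi_gap_cont; auto. }
  split; [|split; [|split; [|split]]].
  - intros x. apply cont_continuity_pt, Hmc.
  - intros x. rewrite !Hm, gap_periodic. reflexivity.
  - intros x. rewrite Hm. apply dphi_pos.
  - rewrite (int01_ext _ (fun y => dp (gap a0 a b y))) by auto. exact H1.
  - intros x. rewrite int01_kernel_conv by auto.
    rewrite (int01_ext m (fun y => dp (gap a0 a b y))), H1 by auto.
    rewrite (sum1_ext _ _ (fun k => a k * cos (2 * PI * INR k * x) + b k * sin (2 * PI * INR k * x))).
    + rewrite Hm, dphi_hamiltonian by (auto using alpha_pos; apply HC).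
      unfold gap, trig. ring.
    + intros k Hk'. destruct (Hk k Hk') as [Hc Hs]. rewrite !Hext, Hc, Hs.
      specialize (Hp k Hk'). field. lra.
Qed.

Lemma maximizer_of_solves_P m H : j <> 0 -> solves_P alpha j V kernel m H ->
  exists a0 a b, H = a0 - p 0%nat /\ inC n V a0 a b /\ euler_lagrange a0 a b /\
                 forall x, m x = dp (gap a0 a b x).
Proof.
  intros Hj [Hmc [_ [Hmpos [Hm1 Heq]]]]. apply cont_of_continuity in Hmc.
  set (a := fun k => p k * int01 (fun y => m y * cosk k y)).
  set (b := fun k => p k * int01 (fun y => m y * sink k y)).
  exists (H + p 0%nat), a, b.
  assert (Hgap : forall x, gap (H + p 0%nat) a b x = j ^ 2 / (2 * Rpower (m x) alpha)).
  { intros x. specialize (Heq x). rewrite int01_kernel_conv, Hm1 in Heq by auto.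
    unfold gap, trig, a, b. lra. }
  assert (HC : inC n V (H + p 0%nat) a b).
  { intros x. generalize (Hgap x). unfold gap. intros ->.
    generalize (pow2_half_pos j Hj) (Rpower_pos (m x) alpha). intros.
    replace (j ^ 2 / (2 * Rpower (m x) alpha)) with (j ^ 2 / 2 / Rpower (m x) alpha) by (field; lra).
    apply Rdiv_lt_0_compat; lra. }
  assert (Hm : forall x, m x = dp (gap (H + p 0%nat) a b x))
    by (intros x; rewrite Hgap, hamiltonian_dphi; [reflexivity | apply alpha_pos | auto | apply Hmpos]).
  split; [ring | split; [exact HC | split; [|exact Hm]]].
  apply euler_lagrange_iff_moments; auto. split.
  - rewrite <- Hm1. apply int01_ext. intros; rewrite <- Hm; reflexivity.
  - intros k Hk. specialize (Hp k Hk). unfold a, b. split; field_simplify; try lra;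
      apply int01_ext; intros; rewrite <- Hm; reflexivity.
Qed.
End Variational.

Theorem corollary1p2 (alpha j : R) (V : R -> R) (n : nat) (p : nat -> R) :
  0 < alpha <= 2 -> j <> 0 -> C2_T V ->
  p O > 0 -> (forall k, (1 <= k <= n)%nat -> p k > 0) ->
  let G := fun x => sum0 n (fun k => p k * cos (2 * PI * INR k * x)) in
  exists (a0s : R) (as_ bs : nat -> R),
    (* (a0s, as_, bs) is the unique maximizer over C *)
    inC n V a0s as_ bs /\
    (forall a0 a b, inC n V a0 a b ->
       Jfun alpha j n V p a0 a b <= Jfun alpha j n V p a0s as_ bs) /\
    (forall a0 a b, inC n V a0 a b ->
       (forall a0' a' b', inC n V a0' a' b' ->
          Jfun alpha j n V p a0' a' b' <= Jfun alpha j n V p a0 a b) ->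
       coef_eq n a0 a b a0s as_ bs) /\
    (* (P) has exactly one solution, given by the formula *)
    (forall (m : R -> R) (H : R),
       solves_P alpha j V G m H <->
       ((forall x, m x = c_j alpha j / Rpower (trig n a0s as_ bs x - V x) (1 / alpha))
        /\ H = a0s - p O)).
Proof.
  intros Ha Hj HV _ Hp G.
  destruct (exists_maximizer alpha j V n p Ha HV Hp) as [a0s [as_ [bs [HCs [HEs Hmax]]]]].
  exists a0s, as_, bs. split; [exact HCs | split; [exact Hmax | split]].
  - intros a0 a b HC Hm.
    exact (euler_lagrange_max_unique alpha j V n p Ha HV Hp _ _ _ _ _ _ HCs HEs HC (Hm _ _ _ HCs)).
  - intros m H. split.
    + intros Hsol.
      destruct (maximizer_of_solves_P alpha j V n p Ha HV Hp m H Hj Hsol)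
        as [a0 [a [b [-> [HC [HE Hm]]]]]].
      assert (E := euler_lagrange_max_unique alpha j V n p Ha HV Hp _ _ _ _ _ _ HC HE HCs
                     (Hmax _ _ _ HC)).
      split; [|destruct E; lra].
      intros x. rewrite Hm, (gap_ext V n _ _ _ _ _ _ (coef_eq_sym n _ _ _ _ _ _ E)).
      reflexivity.
    + intros [Hm ->].
      exact (solves_P_of_maximizer alpha j V n p Ha HV Hp _ _ _ m _ Hj HCs HEs Hm eq_refl).
Qed.
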